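(* Let $n\geq 3$, $2\leq p<n$, $-\infty<\alpha<\frac{n-p}{p}$, let $b\in\mathbb{R}$ and set $\delta_1=n-p-\alpha p-\frac{n+pb}{p}$, $\delta_2=n-p-\alpha p-\frac{bp}{p-1}$. Let $|x|$ be the Euclidean norm and $\nabla$ the standard gradient on $\mathbb{R}^n$. Then for every $f\in C_0^\infty(\mathbb{R}^n\setminus\{0\})$, $$\int_{\mathbb{R}^n}\frac{|\nabla f(x)|^p}{|x|^{\alpha p}}dx-\left(\frac{n-p-\alpha p}{p}\right)^p\int_{\mathbb{R}^n}\frac{|f(x)|^p}{|x|^{(\alpha+1)p}}dx\geq C_p\frac{\left(\int_{\mathbb{R}^n}|f(x)|^p|x|^{\delta_1}dx\right)^p}{\left(\int_{\mathbb{R}^n}|f(x)|^p|x|^{\delta_2}dx\right)^{p-1}},$$ where $C_p=c_p\left|\frac{n(p-1)-pb}{p^2}\right|^p$ and $c_p=\min_{0<t\leq 1/2}\left((1-t)^p-t^p+pt^{p-1}\right)$. *)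

(* classical reals.  R^n is modelled by points x : nat -> R of
   which only the first n coordinates x 0, ..., x (n-1) are used. *)
From Stdlib Require Import Reals Lra Lia List ClassicalEpsilon.
Open Scope R_scope.

Fixpoint sumn (n : nat) (g : nat -> R) : R :=
  match n with O => 0 | S k => sumn k g + g k end.

Definition normn (n : nat) (x : nat -> R) : R := sqrt (sumn n (fun i => x i ^ 2)).
Definition distn (n : nat) (x y : nat -> R) : R := normn n (fun i => y i - x i).

Definition upd (x : nat -> R) (k : nat) (t : R) : nat -> R :=
  fun i => if Nat.eqb i k then t else x i.

(* real power x^y for x >= 0, with the convention 0^y = 0 *)
Definition rpow (x y : R) : R := if Rle_dec x 0 then 0 else Rpower x y.

(* integral over R of a function vanishing outside a bounded interval:
   the Riemann integral over a symmetric interval outside of which g vanishes *)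
Definition is_Rint (g : R -> R) (I : R) : Prop :=
  exists M, 0 < M /\ (forall t, M < Rabs t -> g t = 0) /\
    exists pr : Riemann_integrable g (- M) M, RiemannInt pr = I.
Definition Rint (g : R -> R) : R := epsilon (inhabits 0) (is_Rint g).

Fixpoint integ (k : nat) (F : (nat -> R) -> R) (x : nat -> R) : R :=
  match k with
  | O => F x
  | S k' => Rint (fun t => integ k' F (upd x k' t))
  end.
Definition integRn (n : nat) (F : (nat -> R) -> R) : R := integ n F (fun _ => 0).

Definition partial (i : nat) (f : (nat -> R) -> R) (x : nat -> R) : R :=
  epsilon (inhabits 0) (fun L => derivable_pt_lim (fun t => f (upd x i t)) (x i) L).
Definition partial_exists (i : nat) (f : (nat -> R) -> R) : Prop :=
  forall x, exists L, derivable_pt_lim (fun t => f (upd x i t)) (x i) L.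
Definition iter_partial (l : list nat) (f : (nat -> R) -> R) : (nat -> R) -> R :=
  fold_right partial f l.

Definition contn (n : nat) (g : (nat -> R) -> R) : Prop :=
  forall x eps, 0 < eps -> exists d, 0 < d /\
    forall y, distn n x y < d -> Rabs (g y - g x) < eps.

Definition smoothn (n : nat) (f : (nat -> R) -> R) : Prop :=
  forall l : list nat, Forall (fun i => (i < n)%nat) l ->
    contn n (iter_partial l f) /\
    forall i, (i < n)%nat -> partial_exists i (iter_partial l f).

(* C_0^infinity(R^n \ {0}): smooth with support in an annulus r <= |x| <= R0 *)
Definition C0inf_punct (n : nat) (f : (nat -> R) -> R) : Prop :=
  smoothn n f /\
  exists r R0, 0 < r /\ forall x, (normn n x < r \/ R0 < normn n x) -> f x = 0.

Definition gradnorm (n : nat) (f : (nat -> R) -> R) (x : nat -> R) : R :=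
  sqrt (sumn n (fun i => partial i f x ^ 2)).

Definition cp_fun (p t : R) : R :=
  Rpower (1 - t) p - Rpower t p + p * Rpower t (p - 1).
Definition is_cp (p c : R) : Prop :=
  (exists t0, 0 < t0 <= 1/2 /\ cp_fun p t0 = c) /\
  (forall t, 0 < t <= 1/2 -> c <= cp_fun p t).

(* Let g = (n - p - alpha p) / p > 0 and spow(u) = u |u|^(p-2).  For p >= 2 and real a, b,
     |a + b|^p >= |a|^p + p spow(a) b + c_p |b|^p,
   the constant c_p being exactly what the case b/a < -1 requires.  Take a = - g f / |x| and
   b = (x . grad f + g f) / |x|, so that |a + b| <= |grad f|, multiply by |x|^(-alpha p) and
   integrate: by the divergence identity  int div (x |x|^m |f|^p) = 0  with m = -alpha p - p the
   cross term turns into g^p int |f|^p |x|^(-(alpha+1)p), and the Hardy gap is at least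
   c_p D with D = int |b|^p |x|^(-alpha p).  The same identity with m = delta1 gives
     K int |f|^p |x|^delta1 = - p int spow(f) (x . grad f + g f) |x|^delta1,
   K = (n(p-1) - p b)/p; Young's inequality with a free parameter eps bounds the right-hand
   side by eps^p D + (p-1) eps^(-p/(p-1)) int |f|^p |x|^delta2, and optimizing in eps yields
     |K/p|^p (int |f|^p |x|^delta1)^p / (int |f|^p |x|^delta2)^(p-1) <= D. *)

From Stdlib Require Import Reals Lra Lia List ClassicalEpsilon FunctionalExtensionality Classical.
From Coquelicot Require Import Coquelicot.
Open Scope R_scope.

Lemma rpow_pos_eq x q : 0 < x -> rpow x q = Rpower x q.
Proof. intros H; unfold rpow; destruct (Rle_dec x 0); [lra|auto]. Qed.

Lemma rpow_nonpos x q : x <= 0 -> rpow x q = 0.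
Proof. intros H; unfold rpow; destruct (Rle_dec x 0); [auto|lra]. Qed.

Lemma Rpower_pos x q : 0 < Rpower x q.
Proof. apply exp_pos. Qed.

Lemma rpow_ge0 x q : 0 <= rpow x q.
Proof. unfold rpow; destruct (Rle_dec x 0); [lra|left; apply Rpower_pos]. Qed.

Lemma rpow_gt0 x q : 0 < x -> 0 < rpow x q.
Proof. intros; rewrite rpow_pos_eq; auto; apply Rpower_pos. Qed.

Lemma rpow_abs0 q : rpow (Rabs 0) q = 0.
Proof. rewrite Rabs_R0; apply rpow_nonpos; lra. Qed.

Lemma rpow_mult a b q : 0 <= a -> 0 <= b -> rpow (a * b) q = rpow a q * rpow b q.
Proof.
  intros [Ha|Ha] [Hb|Hb]; subst; rewrite ?Rmult_0_r, ?Rmult_0_l, ?(rpow_nonpos 0) by lra; try ring.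
  rewrite !rpow_pos_eq by nra. symmetry; apply Rpower_mult_distr; lra.
Qed.

Lemma rpow_plus a q1 q2 : 0 <= a -> rpow a (q1 + q2) = rpow a q1 * rpow a q2.
Proof.
  intros [Ha|Ha].
  - rewrite !rpow_pos_eq; auto. apply Rpower_plus.
  - subst. rewrite !(rpow_nonpos 0); lra.
Qed.

Lemma rpow_rpow a q1 q2 : 0 <= a -> rpow (rpow a q1) q2 = rpow a (q1 * q2).
Proof.
  intros [Ha|Ha].
  - rewrite (rpow_pos_eq a q1), !rpow_pos_eq by (auto; apply Rpower_pos). apply Rpower_mult.
  - subst. rewrite !(rpow_nonpos 0); lra.
Qed.

Lemma rpow_opp a q : 0 <= a -> rpow a (- q) = / rpow a q.
Proof.
  intros [Ha|Ha].
  - rewrite !rpow_pos_eq; auto. apply Rpower_Ropp.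
  - subst. rewrite !(rpow_nonpos 0), Rinv_0; lra.
Qed.

Lemma rpow_1 a : 0 <= a -> rpow a 1 = a.
Proof.
  intros [Ha|Ha]; [rewrite rpow_pos_eq; auto; apply Rpower_1; auto|].
  subst; apply rpow_nonpos; lra.
Qed.

Lemma rpow_1_plus a q : 0 <= a -> rpow a (1 + q) = a * rpow a q.
Proof. intros Ha. rewrite rpow_plus, rpow_1; auto. Qed.

Lemma rpow_2 a : 0 <= a -> rpow a 2 = a * a.
Proof. intros Ha. replace 2 with (1 + 1) by lra. rewrite rpow_1_plus, rpow_1; auto. Qed.

Lemma rpow_inv a q : 0 <= a -> rpow (/ a) q = / rpow a q.
Proof.
  intros [Ha|Ha].
  - rewrite !rpow_pos_eq by (auto; apply Rinv_0_lt_compat; auto).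
    unfold Rpower. rewrite ln_Rinv, <- exp_Ropp by auto. f_equal; ring.
  - subst. rewrite Rinv_0, rpow_nonpos, Rinv_0; lra.
Qed.

Lemma rpow1 q : rpow 1 q = 1.
Proof. rewrite rpow_pos_eq by lra. unfold Rpower. rewrite ln_1, Rmult_0_r. apply exp_0. Qed.

Lemma rpow_lt_base a b q : 0 < q -> 0 <= a < b -> rpow a q < rpow b q.
Proof.
  intros Hq [[Ha|Ha] Hab].
  - rewrite !rpow_pos_eq by lra. apply Rlt_Rpower_l; lra.
  - subst. rewrite (rpow_nonpos 0) by lra. apply rpow_gt0; lra.
Qed.

Lemma rpow_le_base a b q : 0 <= q -> 0 <= a <= b -> rpow a q <= rpow b q.
Proof.
  intros [Hq|Hq] [[Ha|Ha] Hab].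
  - rewrite !rpow_pos_eq by lra. apply Rle_Rpower_l; lra.
  - subst. rewrite (rpow_nonpos 0) by lra. apply rpow_ge0.
  - subst. rewrite !rpow_pos_eq, !Rpower_O; lra.
  - subst. rewrite (rpow_nonpos 0) by lra. apply rpow_ge0.
Qed.

Lemma rpow_le1 a q : 0 <= a <= 1 -> 0 <= q -> rpow a q <= 1.
Proof. intros Ha Hq. rewrite <- (rpow1 q). apply rpow_le_base; lra. Qed.

Lemma rpow_le_self u q : 0 <= u <= 1 -> 1 <= q -> rpow u q <= u.
Proof.
  intros Hu Hq. replace q with (1 + (q - 1)) by ring. rewrite rpow_1_plus by lra.
  pose proof (rpow_le1 u (q - 1) Hu ltac:(lra)). pose proof (rpow_ge0 u (q - 1)). nra.
Qed.

Lemma rpow_sqrt s q : 0 <= s -> rpow (sqrt s) q = rpow s (q / 2).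
Proof.
  intros [Hs|Hs].
  - rewrite <- Rpower_sqrt, <- (rpow_pos_eq s (/ 2)), rpow_rpow by (auto; lra). f_equal; field.
  - subst. rewrite sqrt_0, !rpow_nonpos; lra.
Qed.

Lemma rpow_small q eps : 0 < q -> 0 < eps ->
  exists d, 0 < d /\ forall a, 0 <= a < d -> rpow a q < eps.
Proof.
  intros Hq He. exists (rpow eps (/ q)). split; [apply rpow_gt0; auto|].
  intros a Ha. apply Rlt_le_trans with (rpow (rpow eps (/ q)) q); [apply rpow_lt_base; auto|].
  rewrite rpow_rpow, Rinv_l, rpow_1; lra.
Qed.

Lemma ball_R_abs (c y : R) (e : posreal) : ball c e y -> Rabs (y - c) < e.
Proof. exact (fun H => H). Qed.

Lemma derivable_pt_lim_rpow x q : 0 < x ->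
  derivable_pt_lim (fun a => rpow a q) x (q * Rpower x (q - 1)).
Proof.
  intros Hx. apply (is_derive_Reals (fun a => rpow a q)).
  apply is_derive_ext_loc with (fun a => Rpower a q).
  - exists (mkposreal x Hx). intros y Hy. apply ball_R_abs, Rabs_def2 in Hy.
    rewrite rpow_pos_eq; auto. simpl in Hy. lra.
  - apply is_derive_Reals. now apply derivable_pt_lim_power.
Qed.

Lemma derivable_pt_lim_rpow_affine a0 k q x : 0 < a0 + k * x ->
  derivable_pt_lim (fun x => rpow (a0 + k * x) q) x (k * (q * Rpower (a0 + k * x) (q - 1))).
Proof.
  intros H. rewrite Rmult_comm.
  apply (derivable_pt_lim_comp (fun x => a0 + k * x) (fun a => rpow a q));
    [|now apply derivable_pt_lim_rpow].
  apply (is_derive_Reals (fun x => a0 + k * x)). auto_derive; auto; ring.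
Qed.

Lemma continuity_pt_intro f x :
  (forall eps, 0 < eps -> exists d, 0 < d /\
     forall y, Rabs (y - x) < d -> Rabs (f y - f x) < eps) ->
  continuity_pt f x.
Proof.
  intros H eps He. destruct (H eps He) as [d [Hd Hy]]. exists d; split; auto.
  intros y [_ Hyx]. apply Hy. exact Hyx.
Qed.

Lemma continuity_pt_elim f x : continuity_pt f x ->
  forall eps, 0 < eps -> exists d, 0 < d /\
    forall y, Rabs (y - x) < d -> Rabs (f y - f x) < eps.
Proof.
  intros H eps He. destruct (H eps He) as [d [Hd Hy]]. exists d; split; auto.
  intros y Hyx. destruct (Req_dec y x) as [->|Hne]; [rewrite Rminus_diag, Rabs_R0; lra|].
  apply Hy. split; [split; [exact I|congruence]|exact Hyx].
Qed.

Lemma continuity_pt_rpow q u : 0 < q -> 0 <= u -> continuity_pt (fun a => rpow a q) u.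
Proof.
  intros Hq [Hu|<-].
  - apply derivable_continuous_pt. eexists. now apply derivable_pt_lim_rpow.
  - apply continuity_pt_intro. intros eps He. destruct (rpow_small q eps Hq He) as [d [Hd Hs]].
    exists d; split; auto. intros y Hy. rewrite Rminus_0_r in Hy.
    rewrite (rpow_nonpos 0), Rminus_0_r by lra.
    destruct (Rle_dec y 0); [rewrite rpow_nonpos, Rabs_R0; lra|].
    rewrite Rabs_pos_eq by apply rpow_ge0. apply Hs. apply Rabs_def2 in Hy. lra.
Qed.

Lemma continuity_pt_rpow_abs q u : 0 < q -> continuity_pt (fun a => rpow (Rabs a) q) u.
Proof.
  intros Hq. apply (continuity_pt_comp Rabs (fun a => rpow a q)); [apply Rcontinuity_abs|].
  apply continuity_pt_rpow; auto. apply Rabs_pos.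
Qed.

Definition spow (p u : R) : R := u * rpow (Rabs u) (p - 2).

Lemma spow0 p : spow p 0 = 0.
Proof. unfold spow; ring. Qed.

Lemma abs_spow p u : Rabs (spow p u) = rpow (Rabs u) (p - 1).
Proof.
  unfold spow. rewrite Rabs_mult, (Rabs_pos_eq (rpow _ _)) by apply rpow_ge0.
  replace (p - 1) with (1 + (p - 2)) by ring. rewrite rpow_1_plus; auto. apply Rabs_pos.
Qed.

Lemma spow_mul_self p u : spow p u * u = rpow (Rabs u) p.
Proof.
  unfold spow. replace p with (2 + (p - 2)) at 2 by ring.
  rewrite rpow_plus, rpow_2 by apply Rabs_pos.
  rewrite <- Rabs_mult, (Rabs_pos_eq (u * u)) by nra. ring.
Qed.

Lemma continuity_pt_spow p u : 1 < p -> continuity_pt (spow p) u.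
Proof.
  intros Hp. destruct (Req_dec u 0) as [->|Hu].
  - apply continuity_pt_intro. intros eps He.
    destruct (rpow_small (p - 1) eps ltac:(lra) He) as [d [Hd Hs]].
    exists d; split; auto. intros y Hy. rewrite spow0, !Rminus_0_r, abs_spow in *.
    apply Hs. split; [apply Rabs_pos|auto].
  - apply continuity_pt_mult; [apply continuity_pt_id|].
    apply (continuity_pt_comp Rabs (fun a => rpow a (p - 2))); [apply Rcontinuity_abs|].
    apply derivable_continuous_pt. eexists. apply derivable_pt_lim_rpow. now apply Rabs_pos_lt.
Qed.

(* On either side of 0, [|u|^p] is a smooth power of [u] or of [-u]; at 0 the
   difference quotient is [|h|^(p-1)] in absolute value. *)
Lemma derivable_pt_lim_rpow_abs p u : 1 < p ->
  derivable_pt_lim (fun a => rpow (Rabs a) p) u (p * spow p u).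
Proof.
  intros Hp.
  assert (Hsplit : forall v, 0 < v -> p * Rpower v (p - 1) = p * (v * rpow v (p - 2))).
  { intros v Hv. rewrite rpow_pos_eq by auto. replace (p - 1) with (1 + (p - 2)) by ring.
    rewrite Rpower_plus, Rpower_1 by lra. ring. }
  destruct (Rtotal_order u 0) as [Hu|[->|Hu]].
  - apply (is_derive_Reals (fun a => rpow (Rabs a) p)).
    apply is_derive_ext_loc with (fun a => rpow (0 + -1 * a) p).
    + exists (mkposreal (- u) ltac:(simpl; lra)). intros y Hy.
      apply ball_R_abs, Rabs_def2 in Hy. simpl in Hy.
      rewrite Rabs_left by lra. f_equal; ring.
    + apply is_derive_Reals. replace (p * spow p u) with (-1 * (p * Rpower (0 + -1 * u) (p - 1))).
      * apply (derivable_pt_lim_rpow_affine 0 (-1) p u). lra.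
      * replace (0 + -1 * u) with (- u) by ring.
        rewrite Hsplit by lra. unfold spow. rewrite Rabs_left by lra. ring.
  - intros eps He. destruct (rpow_small (p - 1) eps ltac:(lra) He) as [d [Hd Hs]].
    exists (mkposreal d Hd). intros h Hh Hhd. simpl in Hhd.
    rewrite Rplus_0_l, Rabs_R0, (rpow_nonpos 0), spow0, Rmult_0_r, !Rminus_0_r by lra.
    unfold Rdiv. rewrite Rabs_mult, Rabs_pos_eq, Rabs_inv by apply rpow_ge0.
    replace p with (1 + (p - 1)) at 1 by ring. rewrite rpow_1_plus by apply Rabs_pos.
    replace (Rabs h * rpow (Rabs h) (p - 1) * / Rabs h) with (rpow (Rabs h) (p - 1))
      by (field; now apply Rabs_no_R0).
    apply Hs. split; [apply Rabs_pos|auto].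
  - apply (is_derive_Reals (fun a => rpow (Rabs a) p)).
    apply is_derive_ext_loc with (fun a => rpow a p).
    + exists (mkposreal u Hu). intros y Hy. apply ball_R_abs, Rabs_def2 in Hy. simpl in Hy.
      rewrite Rabs_right by lra. auto.
    + apply is_derive_Reals. replace (p * spow p u) with (p * Rpower u (p - 1)).
      * now apply derivable_pt_lim_rpow.
      * rewrite Hsplit by lra. unfold spow. rewrite Rabs_right by lra. ring.
Qed.

(** * The elementary inequality [|a + b|^p >= |a|^p + p spow(a) b + c_p |b|^p] *)

Lemma le_of_derivable_nonneg f df a b : a <= b ->
  (forall x, a < x < b -> derivable_pt_lim f x (df x)) ->
  (forall x, a <= x <= b -> 0 <= df x) ->
  (forall x, a <= x <= b -> continuity_pt f x) -> f a <= f b.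
Proof.
  intros Hab Hd Hpos Hc. destruct (MVT_gen f a b df) as [c [Hc1 Hc2]].
  - intros x Hx. rewrite Rmin_left, Rmax_right in Hx by lra. apply is_derive_Reals; auto.
  - intros x Hx. rewrite Rmin_left, Rmax_right in Hx by lra. auto.
  - rewrite Rmin_left, Rmax_right in Hc1 by lra. pose proof (Hpos c Hc1). nra.
Qed.

Lemma continuity_pt_affine a0 k x : continuity_pt (fun x => a0 + k * x) x.
Proof.
  apply derivable_continuous_pt. exists k.
  apply (is_derive_Reals (fun x => a0 + k * x)). auto_derive; auto; ring.
Qed.

Lemma one_plus_rpow_le q x : 1 <= q -> 0 <= x -> 1 + rpow x q <= rpow (1 + x) q.
Proof.
  intros Hq Hx. replace q with (1 + (q - 1)) by ring. rewrite !rpow_1_plus by lra.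
  assert (H1 : 1 <= rpow (1 + x) (q - 1)).
  { pose proof (rpow_le_base 1 (1 + x) (q - 1) ltac:(lra) ltac:(lra)) as H.
    now rewrite rpow1 in H. }
  assert (H2 : rpow x (q - 1) <= rpow (1 + x) (q - 1)) by (apply rpow_le_base; lra).
  nra.
Qed.

Lemma rpow_one_plus_ge p s : 2 <= p -> 0 <= s -> 1 + p * s + rpow s p <= rpow (1 + s) p.
Proof.
  intros Hp Hs.
  set (f := fun x => rpow (1 + 1 * x) p - (1 + p * x) - rpow x p).
  assert (f 0 <= f s).
  { apply (le_of_derivable_nonneg f
      (fun x => 1 * (p * rpow (1 + 1 * x) (p - 1)) - p - p * rpow x (p - 1))); auto.
    - intros x Hx. unfold f. apply derivable_pt_lim_minus; [apply derivable_pt_lim_minus|].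
      + rewrite rpow_pos_eq by lra. apply derivable_pt_lim_rpow_affine; lra.
      + apply (is_derive_Reals (fun x => 1 + p * x)). auto_derive; auto; ring.
      + rewrite rpow_pos_eq by lra. now apply derivable_pt_lim_rpow.
    - intros x Hx. pose proof (one_plus_rpow_le (p - 1) x ltac:(lra) ltac:(lra)).
      replace (1 + 1 * x) with (1 + x) by ring. nra.
    - intros x Hx. unfold f. repeat apply continuity_pt_minus.
      + apply (continuity_pt_comp (fun x => 1 + 1 * x) (fun a => rpow a p));
          [apply continuity_pt_affine|apply continuity_pt_rpow; lra].
      + apply continuity_pt_affine.
      + apply continuity_pt_rpow; lra. }
  unfold f in H. rewrite Rmult_0_r, Rplus_0_r, rpow1, (rpow_nonpos 0), Rmult_1_l in H by lra.
  lra.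
Qed.

Lemma rpow_one_minus_ge p s : 2 <= p -> 0 <= s <= 1 -> rpow s p <= rpow (1 - s) p - 1 + p * s.
Proof.
  intros Hp Hs.
  set (f := fun x => rpow (1 + (-1) * x) p + (p * x - 1) - rpow x p).
  assert (f 0 <= f s).
  { apply (le_of_derivable_nonneg f
      (fun x => -1 * (p * rpow (1 + (-1) * x) (p - 1)) + p - p * rpow x (p - 1))); try lra.
    - intros x Hx. unfold f. apply derivable_pt_lim_minus; [apply derivable_pt_lim_plus|].
      + rewrite rpow_pos_eq by lra. apply derivable_pt_lim_rpow_affine; lra.
      + apply (is_derive_Reals (fun x => p * x - 1)). auto_derive; auto; ring.
      + rewrite rpow_pos_eq by lra. now apply derivable_pt_lim_rpow.
    - intros x Hx.
      pose proof (rpow_le_self x (p - 1) ltac:(lra) ltac:(lra)).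
      pose proof (rpow_le_self (1 + -1 * x) (p - 1) ltac:(lra) ltac:(lra)). nra.
    - intros x Hx. unfold f. apply continuity_pt_minus; [apply continuity_pt_plus|].
      + apply (continuity_pt_comp (fun x => 1 + -1 * x) (fun a => rpow a p));
          [apply continuity_pt_affine|apply continuity_pt_rpow; lra].
      + replace (fun x => p * x - 1) with (fun x => -1 + p * x)
          by (apply functional_extensionality; intros; ring).
        apply continuity_pt_affine.
      + apply continuity_pt_rpow; lra. }
  unfold f in H. replace (1 + -1 * s) with (1 - s) in H by ring.
  rewrite Rmult_0_r, Rplus_0_r, rpow1, (rpow_nonpos 0) in H by lra. lra.
Qed.

Lemma cp_le1 p c : 2 <= p -> is_cp p c -> c <= 1.
Proof.
  intros Hp [_ Hc]. specialize (Hc (1 / 2) ltac:(lra)). unfold cp_fun in Hc.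
  replace (1 - 1 / 2) with (1 / 2) in Hc by field.
  assert (Hhalf : Rpower (1 / 2) (p - 1) = / exp ((p - 1) * ln 2)).
  { unfold Rpower. rewrite <- exp_Ropp. f_equal.
    unfold Rdiv. rewrite Rmult_1_l, ln_Rinv by lra. ring. }
  assert (Hexp : p <= exp ((p - 1) * ln 2)).
  { replace ((p - 1) * ln 2) with (ln 2 + (p - 2) * ln 2) by ring.
    rewrite exp_plus, exp_ln by lra. pose proof (exp_ineq1_le ((p - 2) * ln 2)).
    pose proof ln_lt_2. nra. }
  pose proof (exp_pos ((p - 1) * ln 2)).
  assert (p * / exp ((p - 1) * ln 2) <= 1).
  { apply Rmult_le_reg_r with (exp ((p - 1) * ln 2)); auto.
    rewrite Rmult_assoc, Rinv_l by lra. lra. }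
  rewrite Hhalf in Hc. lra.
Qed.

Lemma cp_ge0 p c : 2 <= p -> is_cp p c -> 0 <= c.
Proof.
  intros Hp [[t0 [Ht0 <-]] _]. unfold cp_fun.
  pose proof (Rle_Rpower_l t0 (1 - t0) p ltac:(lra) ltac:(lra)).
  pose proof (Rpower_pos t0 (p - 1)). nra.
Qed.

Lemma Rpower_split x p : 0 < x -> Rpower x p = x * Rpower x (p - 1).
Proof.
  intros Hx. replace p with (1 + (p - 1)) at 1 by ring. rewrite Rpower_plus, Rpower_1; lra.
Qed.

(* This is why the minimum defining [c_p] may be restricted to [(0, 1/2]]. *)
Lemma cp_fun_reflect_le p t : 2 <= p -> 1 / 2 <= t < 1 -> cp_fun p (1 - t) <= cp_fun p t.
Proof.
  intros Hp Ht. unfold cp_fun. replace (1 - (1 - t)) with t by ring. set (u := 1 - t).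
  assert (Hu : 0 < u <= t) by (unfold u; lra).
  rewrite (Rpower_split t p), (Rpower_split u p), (Rpower_split t (p - 1)),
    (Rpower_split u (p - 1)) by lra.
  replace (p - 1 - 1) with (p - 2) by ring.
  set (T := Rpower t (p - 2)). set (U := Rpower u (p - 2)).
  assert (HTU : U <= T) by (apply Rle_Rpower_l; lra). assert (0 < U) by apply Rpower_pos.
  assert (Hsum : t + u = 1) by (unfold u; ring).
  assert (u * U <= t * T) by nra.
  assert (H1 : 0 <= t * u * (T - U)) by (apply Rmult_le_pos; [nra|lra]).
  assert (H3 : t * t * T - u * u * U <= t * T - u * U).
  { replace (t * T - u * U - (t * t * T - u * u * U)) with (t * u * (T - U)) in H1; [nra|].
    replace u with (1 - t) by (unfold u; ring). ring. }
  nra.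
Qed.

Lemma rpow_abs_one_plus_ge p c s : 2 <= p -> is_cp p c ->
  1 + p * s + c * rpow (Rabs s) p <= rpow (Rabs (1 + s)) p.
Proof.
  intros Hp Hc. pose proof (cp_le1 p c Hp Hc). pose proof (cp_ge0 p c Hp Hc).
  destruct (Rle_dec 0 s) as [Hs|Hs]; [|destruct (Rle_dec (-1) s) as [Hs'|Hs']].
  - rewrite !Rabs_pos_eq by lra. pose proof (rpow_one_plus_ge p s Hp Hs).
    pose proof (rpow_ge0 s p). nra.
  - rewrite Rabs_left, Rabs_pos_eq by lra. pose proof (rpow_one_minus_ge p (- s) Hp ltac:(lra)).
    replace (1 - - s) with (1 + s) in H1 by ring. pose proof (rpow_ge0 (- s) p). nra.
  - (* for s < -1, substitute s = -1/t with t in (0, 1): this is exactly the definition of c_p *)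
    set (t := - / s). assert (Ht : 0 < t < 1).
    { unfold t. split; [apply Ropp_0_gt_lt_contravar, Rinv_lt_0_compat; lra|].
      rewrite <- Rinv_1, <- Rinv_opp. apply Rinv_lt_contravar; lra. }
    assert (Hs_t : s = - / t) by (unfold t; field; lra).
    rewrite Rabs_left, Rabs_left by lra.
    replace (- (1 + s)) with ((1 - t) * / t) by (rewrite Hs_t; field; lra).
    replace (- s) with (/ t) by (rewrite Hs_t; field; lra).
    rewrite rpow_mult, !rpow_inv, !rpow_pos_eq
      by (try apply Rlt_le; try apply Rinv_0_lt_compat; lra).
    assert (Hct : c <= cp_fun p t).
    { destruct Hc as [_ Hc]. destruct (Rle_dec t (1 / 2)); [apply Hc; lra|].
      apply Rle_trans with (cp_fun p (1 - t)); [apply Hc; lra|apply cp_fun_reflect_le; lra]. }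
    unfold cp_fun in Hct. rewrite (Rpower_split t p) in * by lra.
    pose proof (Rpower_pos t (p - 1)).
    rewrite Hs_t. apply Rmult_le_reg_r with (t * Rpower t (p - 1)); [nra|].
    replace ((1 + p * - / t + c * / (t * Rpower t (p - 1))) * (t * Rpower t (p - 1)))
      with (t * Rpower t (p - 1) - p * Rpower t (p - 1) + c) by (field; lra).
    replace (Rpower (1 - t) p * / (t * Rpower t (p - 1)) * (t * Rpower t (p - 1)))
      with (Rpower (1 - t) p) by (field; lra).
    lra.
Qed.

Lemma rpow_abs_add_ge p c a b : 2 <= p -> is_cp p c ->
  rpow (Rabs a) p + p * spow p a * b + c * rpow (Rabs b) p <= rpow (Rabs (a + b)) p.
Proof.
  intros Hp Hc. destruct (Req_dec a 0) as [->|Ha].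
  - rewrite spow0, rpow_abs0, !Rplus_0_l, Rmult_0_r, Rmult_0_l, Rplus_0_l.
    pose proof (cp_le1 p c Hp Hc). pose proof (rpow_ge0 (Rabs b) p). nra.
  - set (s := b / a). assert (Hb : b = a * s) by (unfold s; field; auto). rewrite Hb.
    replace (a + a * s) with (a * (1 + s)) by ring. rewrite !Rabs_mult, !rpow_mult by apply Rabs_pos.
    replace (p * spow p a * (a * s)) with (p * s * (spow p a * a)) by ring.
    rewrite spow_mul_self.
    pose proof (rpow_abs_one_plus_ge p c s Hp Hc). pose proof (rpow_ge0 (Rabs a) p). nra.
Qed.

Lemma exp_convex l x y : 0 <= l <= 1 -> exp (l * x + (1 - l) * y) <= l * exp x + (1 - l) * exp y.
Proof.
  intros Hl. set (m := l * x + (1 - l) * y).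
  assert (Htangent : forall z, exp m * (1 + (z - m)) <= exp z).
  { intros z. replace z with (m + (z - m)) at 2 by ring. rewrite exp_plus.
    pose proof (exp_pos m). pose proof (exp_ineq1_le (z - m)). nra. }
  pose proof (Htangent x). pose proof (Htangent y).
  assert (l * (exp m * (1 + (x - m))) + (1 - l) * (exp m * (1 + (y - m))) = exp m)
    by (unfold m; ring).
  nra.
Qed.

Lemma young p u v : 1 < p -> 0 <= u -> 0 <= v ->
  u * v <= rpow u p / p + rpow v (p / (p - 1)) / (p / (p - 1)).
Proof.
  intros Hp Hu Hv. set (q := p / (p - 1)).
  assert (Hq : 0 < q) by (unfold q; apply Rdiv_lt_0_compat; lra).
  pose proof (rpow_ge0 u p). pose proof (rpow_ge0 v q).
  destruct Hu as [Hu|<-]; [destruct Hv as [Hv|<-]|].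
  2, 3: rewrite ?Rmult_0_l, ?Rmult_0_r; apply Rplus_le_le_0_compat;
    apply Rmult_le_pos; try apply Rlt_le, Rinv_0_lt_compat; lra.
  rewrite !rpow_pos_eq by auto. unfold Rpower.
  replace (u * v) with (exp (/ p * (p * ln u) + (1 - / p) * (q * ln v))).
  - replace (exp (p * ln u) / p + exp (q * ln v) / q)
      with (/ p * exp (p * ln u) + (1 - / p) * exp (q * ln v)) by (unfold q; field; lra).
    apply exp_convex. split; [apply Rlt_le, Rinv_0_lt_compat; lra|].
    rewrite <- Rinv_1. apply Rlt_le, Rinv_lt_contravar; lra.
  - replace (/ p * (p * ln u) + (1 - / p) * (q * ln v)) with (ln u + ln v) by (unfold q; field; lra).
    rewrite exp_plus, !exp_ln; auto.
Qed.

Lemma sumn_ext n g h : (forall i, (i < n)%nat -> g i = h i) -> sumn n g = sumn n h.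
Proof. induction n; simpl; intros H; auto. rewrite IHn, H; auto. Qed.

Lemma sumn_le n g h : (forall i, (i < n)%nat -> g i <= h i) -> sumn n g <= sumn n h.
Proof.
  induction n; simpl; intros H; [lra|].
  pose proof (H n ltac:(lia)). pose proof (IHn ltac:(intros; apply H; lia)). lra.
Qed.

Lemma sumn_const n c : sumn n (fun _ => c) = INR n * c.
Proof. induction n; simpl sumn; [simpl; ring|]. rewrite IHn, S_INR; ring. Qed.

Lemma sumn_ge0 n g : (forall i, (i < n)%nat -> 0 <= g i) -> 0 <= sumn n g.
Proof. intros H. rewrite <- (Rmult_0_r (INR n)), <- sumn_const. now apply sumn_le. Qed.

Lemma sumn_sq_ge0 n g : 0 <= sumn n (fun i => g i ^ 2).
Proof. apply sumn_ge0; intros; apply pow2_ge_0. Qed.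

Lemma sumn_plus n g h : sumn n (fun i => g i + h i) = sumn n g + sumn n h.
Proof. induction n; simpl; [ring|]. rewrite IHn; ring. Qed.

Lemma sumn_scal n a g : sumn n (fun i => a * g i) = a * sumn n g.
Proof. induction n; simpl; [ring|]. rewrite IHn; ring. Qed.

Lemma le_sumn n g i : (i < n)%nat -> (forall j, (j < n)%nat -> 0 <= g j) -> g i <= sumn n g.
Proof.
  induction n; intros Hi H; [lia|]. simpl. destruct (Nat.eq_dec i n) as [->|Hne].
  - pose proof (sumn_ge0 n g ltac:(intros; apply H; lia)). lra.
  - pose proof (H n ltac:(lia)). pose proof (IHn ltac:(lia) ltac:(intros; apply H; lia)). lra.
Qed.

Lemma sumn_indicator n k a : 0 <= a -> sumn n (fun j => if Nat.eqb j k then a else 0) <= a.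
Proof.
  intros Ha. induction n; simpl; [lra|].
  destruct (Nat.eqb_spec n k) as [->|]; [|lra].
  rewrite (sumn_ext k _ (fun _ => 0)), sumn_const; [lra|].
  intros i Hi. destruct (Nat.eqb_spec i k); [lia|auto].
Qed.

Lemma cauchy_schwarz_sumn n a b :
  (sumn n (fun i => a i * b i)) ^ 2 <= sumn n (fun i => a i ^ 2) * sumn n (fun i => b i ^ 2).
Proof.
  set (A := sumn n (fun i => a i ^ 2)). set (B := sumn n (fun i => b i ^ 2)).
  set (C := sumn n (fun i => a i * b i)).
  assert (HA : 0 <= A) by apply sumn_sq_ge0. assert (HB : 0 <= B) by apply sumn_sq_ge0.
  assert (H0 : 0 <= sumn n (fun i => (B * a i - C * b i) ^ 2)) by apply sumn_sq_ge0.
  rewrite (sumn_ext n _ (fun i => (B * B) * a i ^ 2 + ((-2 * B * C) * (a i * b i) + (C * C) * b i ^ 2)))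
    in H0 by (intros; ring).
  rewrite !sumn_plus, !sumn_scal in H0. fold A B C in H0.
  destruct HB as [HB|HB].
  - assert (A * B - C * C >= 0) by (destruct (Rle_dec 0 (A * B - C * C)); nra). nra.
  - assert (HC : C = 0).
    { unfold C. rewrite (sumn_ext n _ (fun _ => 0)), sumn_const; [ring|].
      intros i Hi. assert (b i ^ 2 <= B)
        by (apply (le_sumn n (fun i => b i ^ 2) i); auto; intros; apply pow2_ge_0).
      assert (b i = 0) by nra. rewrite H1; ring. }
    rewrite HC. nra.
Qed.

Lemma upd_eq x k t : upd x k t k = t.
Proof. unfold upd. now rewrite Nat.eqb_refl. Qed.

Lemma upd_neq x k t j : j <> k -> upd x k t j = x j.
Proof. intros H. unfold upd. destruct (Nat.eqb_spec j k); [lia|auto]. Qed.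

Lemma upd_id x k : upd x k (x k) = x.
Proof.
  apply functional_extensionality; intros j. unfold upd.
  destruct (Nat.eqb_spec j k); subst; auto.
Qed.

Lemma upd_upd x k s t : upd (upd x k s) k t = upd x k t.
Proof. apply functional_extensionality; intros j. unfold upd. destruct (Nat.eqb_spec j k); auto. Qed.

Lemma upd_comm x k s i t : k <> i -> upd (upd x k s) i t = upd (upd x i t) k s.
Proof.
  intros H. apply functional_extensionality; intros j. unfold upd.
  destruct (Nat.eqb_spec j i), (Nat.eqb_spec j k); subst; auto; lia.
Qed.

Lemma normn_ge0 n x : 0 <= normn n x.
Proof. apply sqrt_pos. Qed.

Lemma normn_sq n x : normn n x * normn n x = sumn n (fun i => x i ^ 2).
Proof. apply sqrt_sqrt, sumn_sq_ge0. Qed.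

Lemma abs_coord_le_normn n x j : (j < n)%nat -> Rabs (x j) <= normn n x.
Proof.
  intros Hj. unfold normn. rewrite <- sqrt_Rsqr_abs. apply sqrt_le_1_alt.
  rewrite Rsqr_pow2. apply (le_sumn n (fun i => x i ^ 2) j); auto. intros; apply pow2_ge_0.
Qed.

Lemma distnn n x : distn n x x = 0.
Proof.
  unfold distn, normn. rewrite (sumn_ext n _ (fun _ => 0)), sumn_const by (intros; ring).
  rewrite Rmult_0_r. apply sqrt_0.
Qed.

Lemma abs_sub_coord_le_distn n x y i : (i < n)%nat -> Rabs (y i - x i) <= distn n x y.
Proof. apply (abs_coord_le_normn n (fun i => y i - x i)). Qed.

Lemma sqrt_sq_plus_le a c : 0 <= c -> sqrt (a ^ 2 + c) <= Rabs a + sqrt c.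
Proof.
  intros Hc. pose proof (Rabs_pos a). pose proof (sqrt_pos c).
  rewrite <- (sqrt_Rsqr (Rabs a + sqrt c)) by lra.
  apply sqrt_le_1_alt. unfold Rsqr. pose proof (sqrt_sqrt c Hc).
  replace (a ^ 2) with (Rabs a * Rabs a) by (rewrite <- Rabs_mult, Rabs_pos_eq; nra).
  nra.
Qed.

Lemma distn_upd n x y k s t : distn n (upd x k s) (upd y k t) <= Rabs (t - s) + distn n x y.
Proof.
  unfold distn, normn. eapply Rle_trans; [|apply sqrt_sq_plus_le, sumn_sq_ge0].
  apply sqrt_le_1_alt.
  apply Rle_trans with (sumn n (fun j => (y j - x j) ^ 2 + (if Nat.eqb j k then (t - s) ^ 2 else 0))).
  - apply sumn_le. intros j Hj. unfold upd. destruct (Nat.eqb_spec j k); [|lra].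
    pose proof (pow2_ge_0 (y j - x j)); lra.
  - rewrite sumn_plus. pose proof (sumn_indicator n k ((t - s) ^ 2) ltac:(apply pow2_ge_0)). lra.
Qed.

Lemma distn_upd_l n x k s t : distn n (upd x k s) (upd x k t) <= Rabs (t - s).
Proof. pose proof (distn_upd n x x k s t). rewrite distnn in H. lra. Qed.

(* [contn n F] unfolds to [forall x, cont_at n F x]. *)
Definition cont_at n (F : (nat -> R) -> R) x := forall eps, 0 < eps -> exists d, 0 < d /\
  forall y, distn n x y < d -> Rabs (F y - F x) < eps.

Lemma cont_at_const (n : nat) c x : cont_at n (fun _ => c) x.
Proof. intros eps He. exists 1. split; [lra|]. intros. rewrite Rminus_diag, Rabs_R0; auto. Qed.

Lemma cont_at_coord n i x : (i < n)%nat -> cont_at n (fun y => y i) x.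
Proof.
  intros Hi eps He. exists eps. split; auto. intros y Hy.
  eapply Rle_lt_trans; [apply (abs_sub_coord_le_distn n x y i Hi)|auto].
Qed.

Lemma cont_at_comp n g F x : cont_at n F x -> continuity_pt g (F x) ->
  cont_at n (fun y => g (F y)) x.
Proof.
  intros HF Hg eps He. destruct (continuity_pt_elim g (F x) Hg eps He) as [d1 [Hd1 H1]].
  destruct (HF d1 Hd1) as [d [Hd H2]]. exists d. split; auto.
Qed.

Lemma cont_at_plus n F G x : cont_at n F x -> cont_at n G x -> cont_at n (fun y => F y + G y) x.
Proof.
  intros HF HG eps He.
  destruct (HF (eps / 2) ltac:(lra)) as [d1 [Hd1 H1]], (HG (eps / 2) ltac:(lra)) as [d2 [Hd2 H2]].
  exists (Rmin d1 d2). split; [apply Rmin_pos; auto|]. intros y Hy.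
  specialize (H1 y ltac:(pose proof (Rmin_l d1 d2); lra)).
  specialize (H2 y ltac:(pose proof (Rmin_r d1 d2); lra)).
  replace (F y + G y - (F x + G x)) with ((F y - F x) + (G y - G x)) by ring.
  eapply Rle_lt_trans; [apply Rabs_triang|lra].
Qed.

Lemma cont_at_mult n F G x : cont_at n F x -> cont_at n G x -> cont_at n (fun y => F y * G y) x.
Proof.
  intros HF HG eps He.
  set (a := Rabs (F x) + 1). set (b := Rabs (G x) + 1).
  assert (Ha : 0 < a) by (unfold a; pose proof (Rabs_pos (F x)); lra).
  assert (Hb : 0 < b) by (unfold b; pose proof (Rabs_pos (G x)); lra).
  set (e := Rmin 1 (eps / (2 * (a + b)))).
  assert (He' : 0 < e) by (apply Rmin_pos; [lra|apply Rdiv_lt_0_compat; lra]).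
  assert (He1 : e <= 1) by apply Rmin_l.
  assert (He2 : e * (a + b) <= eps / 2).
  { apply Rle_trans with (eps / (2 * (a + b)) * (a + b)).
    - apply Rmult_le_compat_r; [lra|apply Rmin_r].
    - right. field. lra. }
  clearbody e.
  destruct (HF e He') as [d1 [Hd1 H1]], (HG e He') as [d2 [Hd2 H2]].
  exists (Rmin d1 d2). split; [apply Rmin_pos; auto|]. intros y Hy.
  specialize (H1 y ltac:(pose proof (Rmin_l d1 d2); lra)).
  specialize (H2 y ltac:(pose proof (Rmin_r d1 d2); lra)).
  replace (F y * G y - F x * G x) with ((F y - F x) * G y + F x * (G y - G x)) by ring.
  eapply Rle_lt_trans; [apply Rabs_triang|]. rewrite !Rabs_mult.
  assert (HGy : Rabs (G y) <= b).
  { unfold b. replace (G y) with (G x + (G y - G x)) by ring.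
    eapply Rle_trans; [apply Rabs_triang|lra]. }
  assert (Rabs (F y - F x) * Rabs (G y) <= e * b)
    by (apply Rmult_le_compat; try apply Rabs_pos; lra).
  assert (Rabs (F x) * Rabs (G y - G x) <= a * e)
    by (apply Rmult_le_compat; try apply Rabs_pos; unfold a; lra).
  lra.
Qed.

Lemma cont_at_div n F G x : cont_at n F x -> cont_at n G x -> G x <> 0 ->
  cont_at n (fun y => F y / G y) x.
Proof.
  intros HF HG Hx. apply cont_at_mult; auto. apply (cont_at_comp n Rinv); auto.
  apply continuity_pt_inv; auto. apply continuity_pt_id.
Qed.

Lemma cont_at_sumn n m H x : (forall i, (i < m)%nat -> cont_at n (H i) x) ->
  cont_at n (fun y => sumn m (fun i => H i y)) x.
Proof.
  induction m; intros HH; simpl; [apply cont_at_const|].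
  apply cont_at_plus; [apply IHm; intros; apply HH|apply HH]; lia.
Qed.

Lemma cont_at_normn n x : cont_at n (normn n) x.
Proof.
  unfold normn. apply (cont_at_comp n sqrt); [|apply continuity_pt_sqrt, sumn_sq_ge0].
  apply cont_at_sumn. intros i Hi. simpl.
  repeat apply cont_at_mult; auto using cont_at_coord, cont_at_const.
Qed.

Lemma continuity_pt_upd n H x k t : contn n H -> continuity_pt (fun t => H (upd x k t)) t.
Proof.
  intros HH. apply continuity_pt_intro. intros eps He.
  destruct (HH (upd x k t) eps He) as [d [Hd Hy]].
  exists d; split; auto. intros y Hyt. apply Hy. eapply Rle_lt_trans; [apply distn_upd_l|auto].
Qed.

Lemma ex_RInt_upd n H x k a b : contn n H -> ex_RInt (fun t => H (upd x k t)) a b.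
Proof.
  intros HH. apply (ex_RInt_continuous (V:=R_CompleteNormedModule)). intros z _.
  apply continuity_pt_filterlim. eapply continuity_pt_upd; eauto.
Qed.

Lemma contn_RInt_param n H M k : contn n H -> 0 < M ->
  contn n (fun x => RInt (fun t => H (upd x k t)) (- M) M).
Proof.
  intros HH HM x eps He.
  set (e := eps / (4 * M)). assert (He' : 0 < e) by (unfold e; apply Rdiv_lt_0_compat; lra).
  assert (Hd : forall t, {d : R | 0 < d /\
    forall z, distn n (upd x k t) z < d -> Rabs (H z - H (upd x k t)) < e / 2}).
  { intros t. apply constructive_indefinite_description. apply HH. lra. }
  set (dl := fun t => proj1_sig (Hd t)).
  assert (Hdl : forall t, 0 < dl t / 2).
  { intros t; unfold dl; pose proof (proj1 (proj2_sig (Hd t))); lra. }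
  (* uniform continuity of [H] along the compact segment [x + [-M, M] e_k] *)
  destruct (compactness_value_1d (- M) M (fun t => mkposreal _ (Hdl t))) as [d Hcv].
  exists d. split; [apply cond_pos|]. intros y Hy.
  assert (Hb : forall s, - M <= s <= M -> Rabs (H (upd y k s) - H (upd x k s)) <= e).
  { intros s Hs. specialize (Hcv s Hs). simpl in Hcv.
    apply NNPP. intros Hn. apply Hcv. intros [t [Ht [Hst Hdt]]].
    apply Hn. unfold dl in *. destruct (proj2_sig (Hd t)) as [Hdt0 Hdt1]. simpl in *.
    assert (A1 : Rabs (H (upd y k s) - H (upd x k t)) < e / 2).
    { apply Hdt1. eapply Rle_lt_trans; [apply distn_upd|lra]. }
    assert (A2 : Rabs (H (upd x k t) - H (upd x k s)) < e / 2).
    { rewrite Rabs_minus_sym. apply Hdt1. eapply Rle_lt_trans; [apply distn_upd_l|lra]. }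
    pose proof (Rabs_triang (H (upd y k s) - H (upd x k t)) (H (upd x k t) - H (upd x k s))).
    replace (H (upd y k s) - H (upd x k t) + (H (upd x k t) - H (upd x k s)))
      with (H (upd y k s) - H (upd x k s)) in H0 by ring.
    lra. }
  rewrite <- (RInt_minus (V:=R_CompleteNormedModule)) by (eapply ex_RInt_upd; eauto).
  eapply Rle_lt_trans; [apply abs_RInt_le_const; [lra| |exact Hb]|].
  - apply (ex_RInt_minus (V:=R_CompleteNormedModule)); eapply ex_RInt_upd; eauto.
  - unfold e. replace ((M - - M) * (eps / (4 * M))) with (eps / 2) by (field; lra). lra.
Qed.

(** * Iterated integrals of continuous functions with support in a cube *)

Lemma RInt_0 a b : RInt (fun _ => 0) a b = 0.
Proof.
  rewrite (RInt_const (V:=R_CompleteNormedModule)). unfold scal; simpl; unfold mult; simpl. ring.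
Qed.

Lemma RInt_lin f g a b l u : ex_RInt f l u -> ex_RInt g l u ->
  RInt (fun t => a * f t + b * g t) l u = a * RInt f l u + b * RInt g l u.
Proof.
  intros Hf Hg. apply is_RInt_unique.
  apply (is_RInt_plus (V:=R_CompleteNormedModule) (fun t => a * f t) (fun t => b * g t)).
  - apply (is_RInt_scal (V:=R_CompleteNormedModule) f). apply RInt_correct; auto.
  - apply (is_RInt_scal (V:=R_CompleteNormedModule) g). apply RInt_correct; auto.
Qed.

Lemma RInt_sym_widen g M M2 : (forall t, continuity_pt g t) -> (forall t, M < Rabs t -> g t = 0) ->
  0 < M <= M2 -> RInt g (- M2) M2 = RInt g (- M) M.
Proof.
  intros Hc Hz HM.
  assert (ex : forall a b, ex_RInt g a b).
  { intros a b. apply (ex_RInt_continuous (V:=R_CompleteNormedModule)). intros z _.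
    apply continuity_pt_filterlim, Hc. }
  rewrite <- (RInt_Chasles (V:=R_CompleteNormedModule) g (- M2) (- M) M2),
    <- (RInt_Chasles (V:=R_CompleteNormedModule) g (- M) M M2) by auto.
  rewrite (RInt_ext (V:=R_CompleteNormedModule) g (fun _ => 0) (- M2) (- M)),
    (RInt_ext (V:=R_CompleteNormedModule) g (fun _ => 0) M M2), !RInt_0.
  - unfold plus; simpl. ring.
  - intros x Hx. rewrite Rmin_left, Rmax_right in Hx by lra. apply Hz. rewrite Rabs_pos_eq; lra.
  - intros x Hx. rewrite Rmin_left, Rmax_right in Hx by lra. apply Hz. rewrite Rabs_left; lra.
Qed.

(* [Rint] is defined by a choice; any large enough symmetric interval computes it. *)
Lemma Rint_RInt g M M2 : (forall t, continuity_pt g t) -> (forall t, M < Rabs t -> g t = 0) ->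
  0 < M <= M2 -> Rint g = RInt g (- M2) M2.
Proof.
  intros Hc Hz HM. rewrite (RInt_sym_widen g M M2) by auto.
  assert (HI : is_Rint g (RInt g (- M) M)).
  { exists M. split; [lra|]. split; auto.
    assert (pr : Riemann_integrable g (- M) M) by (apply continuity_implies_RiemannInt; [lra|auto]).
    exists pr. symmetry. apply RInt_Reals. }
  unfold Rint. destruct (epsilon_spec (inhabits 0) (is_Rint g) (ex_intro _ _ HI))
    as [M' [HM' [Hz' [pr' <-]]]].
  rewrite <- RInt_Reals.
  rewrite <- (RInt_sym_widen g M' (Rmax M M')), <- (RInt_sym_widen g M (Rmax M M'));
    auto using Rmax_l, Rmax_r.
  split; [lra|apply Rmax_l].
Qed.

Definition vanish_beyond k n M (F : (nat -> R) -> R) :=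
  forall x j, (k <= j)%nat -> (j < n)%nat -> M < Rabs (x j) -> F x = 0.

Definition Cc_cube n M (F : (nat -> R) -> R) := contn n F /\ vanish_beyond 0 n M F.

Section IteratedIntegrals.

Variables (n : nat) (M : R).
Hypothesis M_pos : 0 < M.

Lemma integ_S_RInt_of k F x : (k < n)%nat -> contn n (integ k F) -> vanish_beyond k n M (integ k F) ->
  integ (S k) F x = RInt (fun t => integ k F (upd x k t)) (- M) M.
Proof.
  intros Hk Hc Hs. simpl. apply (Rint_RInt _ M); [| |lra].
  - intros t; eapply continuity_pt_upd; eauto.
  - intros t Ht. apply (Hs _ k); auto. rewrite upd_eq; auto.
Qed.

Lemma integ_Cc_cube F : Cc_cube n M F -> forall k, (k <= n)%nat ->
  contn n (integ k F) /\ vanish_beyond k n M (integ k F).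
Proof.
  intros [Hc Hs]. induction k; intros Hk; [split; auto|].
  destruct (IHk ltac:(lia)) as [Hc' Hs']. split.
  - replace (integ (S k) F) with (fun x => RInt (fun t => integ k F (upd x k t)) (- M) M).
    + now apply contn_RInt_param.
    + apply functional_extensionality; intros x. symmetry. apply integ_S_RInt_of; auto.
  - intros x j Hj1 Hj2 Hx. rewrite integ_S_RInt_of by (auto; lia).
    rewrite (RInt_ext (V:=R_CompleteNormedModule) _ (fun _ => 0)); [apply RInt_0|].
    intros t _. apply (Hs' _ j); try lia. rewrite upd_neq; auto; lia.
Qed.

Lemma integ_S_RInt F k x : Cc_cube n M F -> (k < n)%nat ->
  integ (S k) F x = RInt (fun t => integ k F (upd x k t)) (- M) M.
Proof.
  intros HF Hk. destruct (integ_Cc_cube F HF k ltac:(lia)). now apply integ_S_RInt_of.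
Qed.

Lemma ex_RInt_integ F k x a b : Cc_cube n M F -> (k <= n)%nat ->
  ex_RInt (fun t => integ k F (upd x k t)) a b.
Proof. intros HF Hk. eapply ex_RInt_upd, (integ_Cc_cube F HF k Hk). Qed.

Lemma Cc_cube_lin F G a b : Cc_cube n M F -> Cc_cube n M G ->
  Cc_cube n M (fun x => a * F x + b * G x).
Proof.
  intros [HcF HsF] [HcG HsG]. split.
  - intros x. apply cont_at_plus; apply cont_at_mult;
      [apply cont_at_const|exact (HcF x)|apply cont_at_const|exact (HcG x)].
  - intros x j Hj1 Hj2 Hx. rewrite (HsF x j), (HsG x j); auto. ring.
Qed.

Lemma Cc_cube_scal F a : Cc_cube n M F -> Cc_cube n M (fun x => a * F x).
Proof.
  intros HF. replace (fun x => a * F x) with (fun x => a * F x + 0 * F x)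
    by (apply functional_extensionality; intros; ring).
  now apply Cc_cube_lin.
Qed.

Lemma Cc_cube_0 : Cc_cube n M (fun _ => 0).
Proof. split; [intros x; apply cont_at_const|intros x j; auto]. Qed.

Lemma Cc_cube_sumn m H : (forall i, (i < m)%nat -> Cc_cube n M (H i)) ->
  Cc_cube n M (fun x => sumn m (fun i => H i x)).
Proof.
  induction m; intros HH; simpl; [apply Cc_cube_0|].
  replace (fun x => sumn m (fun i => H i x) + H m x)
    with (fun x => 1 * sumn m (fun i => H i x) + 1 * H m x)
    by (apply functional_extensionality; intros; ring).
  apply Cc_cube_lin; [apply IHm; intros|]; apply HH; lia.
Qed.

Lemma integ_lin F G a b : Cc_cube n M F -> Cc_cube n M G -> forall k, (k <= n)%nat -> forall x,
  integ k (fun x => a * F x + b * G x) x = a * integ k F x + b * integ k G x.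
Proof.
  intros HF HG. induction k; intros Hk x; [reflexivity|].
  rewrite !integ_S_RInt by (auto using Cc_cube_lin; lia).
  rewrite (RInt_ext (V:=R_CompleteNormedModule) _
    (fun t => a * integ k F (upd x k t) + b * integ k G (upd x k t)))
    by (intros t _; apply IHk; lia).
  apply RInt_lin; apply ex_RInt_integ; auto; lia.
Qed.

Lemma integ_le F G : Cc_cube n M F -> Cc_cube n M G -> (forall x, F x <= G x) ->
  forall k, (k <= n)%nat -> forall x, integ k F x <= integ k G x.
Proof.
  intros HF HG Hle. induction k; intros Hk x; [apply Hle|].
  rewrite !integ_S_RInt by (auto; lia).
  apply RInt_le; [lra|apply ex_RInt_integ; auto; lia|apply ex_RInt_integ; auto; lia|].
  intros t _. apply IHk; lia.
Qed.

Lemma integ_0 k x : (k <= n)%nat -> integ k (fun _ => 0) x = 0.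
Proof.
  revert x. induction k; intros x Hk; [reflexivity|].
  rewrite integ_S_RInt by (auto using Cc_cube_0; lia).
  rewrite (RInt_ext (V:=R_CompleteNormedModule) _ (fun _ => 0)) by (intros; apply IHk; lia).
  apply RInt_0.
Qed.

Lemma integ_sumn m H : (forall i, (i < m)%nat -> Cc_cube n M (H i)) -> forall k, (k <= n)%nat ->
  forall x, integ k (fun x => sumn m (fun i => H i x)) x = sumn m (fun i => integ k (H i) x).
Proof.
  induction m; intros HH k Hk x; simpl; [now apply integ_0|].
  replace (fun x => sumn m (fun i => H i x) + H m x)
    with (fun x => 1 * sumn m (fun i => H i x) + 1 * H m x)
    by (apply functional_extensionality; intros; ring).
  rewrite integ_lin, IHm by (auto using Cc_cube_sumn; intros; apply HH; lia). ring.
Qed.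

Lemma continuity_2d_pt_upd H x i k u0 v0 : contn n H ->
  continuity_2d_pt (fun u v => H (upd (upd x i u) k v)) u0 v0.
Proof.
  intros HH eps. destruct (HH (upd (upd x i u0) k v0) eps (cond_pos eps)) as [d [Hd Hy]].
  exists (mkposreal (d / 2) ltac:(lra)). intros u v Hu Hv. simpl in *. apply Hy.
  eapply Rle_lt_trans; [apply distn_upd|].
  eapply Rle_lt_trans; [apply Rplus_le_compat_l, distn_upd_l|lra].
Qed.

Lemma derivable_pt_lim_integ G D i : Cc_cube n M G -> Cc_cube n M D -> (i < n)%nat ->
  (forall x, derivable_pt_lim (fun t => G (upd x i t)) (x i) (D x)) ->
  forall k, (k <= i)%nat -> forall x,
    derivable_pt_lim (fun t => integ k G (upd x i t)) (x i) (integ k D x).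
Proof.
  intros HG HD Hi Hder. induction k; intros Hk x; [apply Hder|].
  destruct (integ_Cc_cube D HD k ltac:(lia)) as [HcD _].
  assert (IsD : forall u v, is_derive (fun z => integ k G (upd (upd x i z) k v)) u
                                      (integ k D (upd (upd x i u) k v))).
  { intros u v. pose proof (IHk ltac:(lia) (upd (upd x i u) k v)) as H1.
    rewrite upd_neq, upd_eq in H1 by lia. apply is_derive_Reals.
    eapply derivable_pt_lim_ext; [|exact H1]. intros t. simpl. f_equal.
    rewrite <- upd_comm, upd_upd, upd_comm by lia. reflexivity. }
  apply is_derive_Reals.
  apply is_derive_ext with (fun t => RInt (fun s => integ k G (upd (upd x i t) k s)) (- M) M).
  { intros t. symmetry. apply integ_S_RInt; auto; lia. }
  rewrite (integ_S_RInt D k x) by (auto; lia).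
  rewrite (RInt_ext (V:=R_CompleteNormedModule) (fun s => integ k D (upd x k s))
    (fun s => Derive (fun u => integ k G (upd (upd x i u) k s)) (x i))).
  2:{ intros s _. rewrite (is_derive_unique _ _ _ (IsD _ _)), upd_id. reflexivity. }
  apply (is_derive_RInt_param (fun u s => integ k G (upd (upd x i u) k s))).
  - apply filter_forall. intros u0 t _. eexists. apply IsD.
  - intros t _. eapply continuity_2d_pt_ext; [|apply (continuity_2d_pt_upd _ x i k (x i) t HcD)].
    intros u v. simpl. symmetry. apply is_derive_unique, IsD.
  - apply filter_forall. intros y. apply ex_RInt_integ; auto; lia.
Qed.

Lemma integRn_derivative_eq0 G D i : Cc_cube n M G -> Cc_cube n M D -> (i < n)%nat ->
  (forall x, derivable_pt_lim (fun t => G (upd x i t)) (x i) (D x)) -> integRn n D = 0.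
Proof.
  intros HG HD Hi Hder.
  destruct (integ_Cc_cube G HG i ltac:(lia)) as [HcG HsG].
  destruct (integ_Cc_cube D HD i ltac:(lia)) as [HcD HsD].
  (* fundamental theorem of calculus in the coordinate [i]; [integ i G] vanishes at [+-(M+1)] *)
  assert (Hi0 : forall x, integ (S i) D x = 0).
  { intros x. simpl. rewrite (Rint_RInt _ M (M + 1)); [| |intros t Ht|lra].
    - apply is_RInt_unique.
      replace 0 with (minus (integ i G (upd x i (M + 1))) (integ i G (upd x i (- (M + 1))))).
      + apply (is_RInt_derive (V:=R_CompleteNormedModule) (fun t => integ i G (upd x i t))).
        * intros t _. apply is_derive_Reals.
          pose proof (derivable_pt_lim_integ G D i HG HD Hi Hder i (le_n i) (upd x i t)) as H1.
          rewrite upd_eq in H1. eapply derivable_pt_lim_ext; [|exact H1].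
          intros t'. simpl. rewrite upd_upd. auto.
        * intros t _. apply continuity_pt_filterlim. eapply continuity_pt_upd; eauto.
      + rewrite (HsG (upd x i (M + 1)) i), (HsG (upd x i (- (M + 1))) i); auto;
          rewrite ?upd_eq, ?Rabs_left, ?Rabs_pos_eq by lra; try lra.
        unfold minus, plus, opp; simpl; ring.
    - intros t; eapply continuity_pt_upd; eauto.
    - apply (HsD _ i); auto. rewrite upd_eq; auto. }
  assert (Hm : forall m, (S i + m <= n)%nat -> forall x, integ (S i + m) D x = 0).
  { induction m; intros Hm x; [rewrite Nat.add_0_r; auto|].
    replace (S i + S m)%nat with (S (S i + m)) by lia.
    rewrite integ_S_RInt by (auto; lia).
    rewrite (RInt_ext (V:=R_CompleteNormedModule) _ (fun _ => 0)); [apply RInt_0|].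
    intros t _. apply IHm; lia. }
  unfold integRn. replace n with (S i + (n - S i))%nat by lia. apply Hm. lia.
Qed.

Lemma integRn_lin F G a b : Cc_cube n M F -> Cc_cube n M G ->
  integRn n (fun x => a * F x + b * G x) = a * integRn n F + b * integRn n G.
Proof. intros. now apply integ_lin. Qed.

Lemma integRn_scal F a : Cc_cube n M F -> integRn n (fun x => a * F x) = a * integRn n F.
Proof.
  intros HF. replace (fun x => a * F x) with (fun x => a * F x + 0 * F x)
    by (apply functional_extensionality; intros; ring).
  rewrite integRn_lin; auto. ring.
Qed.

Lemma integRn_le F G : Cc_cube n M F -> Cc_cube n M G -> (forall x, F x <= G x) ->
  integRn n F <= integRn n G.
Proof. intros. now apply integ_le. Qed.

Lemma integRn_ge0 F : Cc_cube n M F -> (forall x, 0 <= F x) -> 0 <= integRn n F.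
Proof.
  intros HF H. rewrite <- (integ_0 n (fun _ => 0)) by lia.
  apply integRn_le; auto using Cc_cube_0.
Qed.

Lemma abs_integRn_le F G : Cc_cube n M F -> Cc_cube n M G -> (forall x, Rabs (F x) <= G x) ->
  Rabs (integRn n F) <= integRn n G.
Proof.
  intros HF HG Hle. apply Rabs_le. split.
  - rewrite <- (Ropp_involutive (integRn n F)), <- (Rmult_1_l (integRn n F)), Ropp_mult_distr_l.
    rewrite <- integRn_scal by auto. apply Ropp_le_contravar.
    apply integRn_le; auto using Cc_cube_scal.
    intros x. specialize (Hle x). apply Rabs_le_between in Hle. lra.
  - apply integRn_le; auto. intros x. specialize (Hle x). pose proof (Rle_abs (F x)). lra.
Qed.

End IteratedIntegrals.

(** * The divergence identity *)

Lemma derivable_pt_lim_loc0 g t0 :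
  (exists d, 0 < d /\ forall t, Rabs (t - t0) < d -> g t = 0) -> derivable_pt_lim g t0 0.
Proof.
  intros [d [Hd Hz]]. apply (is_derive_Reals g). apply is_derive_ext_loc with (fun _ => 0).
  - exists (mkposreal d Hd). intros y Hy. symmetry. apply Hz. exact Hy.
  - apply is_derive_Reals, derivable_pt_lim_const.
Qed.

Lemma normn_upd_near n x i eps : 0 < eps -> exists d, 0 < d /\
  forall t, Rabs (t - x i) < d -> Rabs (normn n (upd x i t) - normn n x) < eps.
Proof.
  intros He. destruct (cont_at_normn n x eps He) as [d [Hd H]]. exists d; split; auto.
  intros t Ht. apply H. rewrite <- (upd_id x i) at 1.
  eapply Rle_lt_trans; [apply distn_upd_l|auto].
Qed.

Lemma derivable_pt_lim_sumn_sq_upd x i t0 m :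
  derivable_pt_lim (fun t => sumn m (fun j => upd x i t j ^ 2)) t0
    (if Nat.ltb i m then 2 * t0 else 0).
Proof.
  induction m; simpl; [apply derivable_pt_lim_const|].
  replace (if Nat.ltb i (S m) then 2 * t0 else 0)
    with ((if Nat.ltb i m then 2 * t0 else 0) + (if Nat.eqb m i then 2 * t0 else 0))
    by (destruct (Nat.ltb_spec i m), (Nat.ltb_spec i (S m)), (Nat.eqb_spec m i); try lia; ring).
  apply derivable_pt_lim_plus; auto. unfold upd. destruct (Nat.eqb_spec m i).
  - apply derivable_pt_lim_ext with (fun t => t ^ 2); [intros; simpl; ring|].
    replace (2 * t0) with (INR 2 * t0 ^ Init.Nat.pred 2) by (simpl; ring).
    apply derivable_pt_lim_pow.
  - apply derivable_pt_lim_const.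
Qed.

Lemma derivable_pt_lim_normn_rpow n x i m : (i < n)%nat -> 0 < normn n x ->
  derivable_pt_lim (fun t => rpow (normn n (upd x i t)) m) (x i) (m * x i * rpow (normn n x) (m - 2)).
Proof.
  intros Hi Hx.
  apply derivable_pt_lim_ext with (fun t => rpow (sumn n (fun j => upd x i t j ^ 2)) (m / 2)).
  { intros t. symmetry. apply rpow_sqrt, sumn_sq_ge0. }
  assert (HS0 : sumn n (fun j => upd x i (x i) j ^ 2) = normn n x * normn n x)
    by (rewrite upd_id, normn_sq; auto).
  replace (m * x i * rpow (normn n x) (m - 2))
    with (m / 2 * Rpower (sumn n (fun j => upd x i (x i) j ^ 2)) (m / 2 - 1) * (2 * x i)).
  - apply (derivable_pt_lim_comp (fun t => sumn n (fun j => upd x i t j ^ 2))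
      (fun a => rpow a (m / 2))).
    + pose proof (derivable_pt_lim_sumn_sq_upd x i (x i) n) as H.
      destruct (Nat.ltb_spec i n); [auto|lia].
    + apply derivable_pt_lim_rpow. nra.
  - rewrite HS0, <- rpow_pos_eq, <- rpow_2, rpow_rpow by (try apply normn_ge0; nra).
    replace (2 * (m / 2 - 1)) with (m - 2) by field. field.
Qed.

Lemma derivable_pt_lim_mult_eq f g x l1 l2 L : derivable_pt_lim f x l1 ->
  derivable_pt_lim g x l2 -> L = l1 * g x + f x * l2 -> derivable_pt_lim (fun t => f t * g t) x L.
Proof. intros H1 H2 ->. exact (derivable_pt_lim_mult f g x l1 l2 H1 H2). Qed.

Lemma derivable_pt_lim_comp_eq f g x l1 l2 L : derivable_pt_lim f x l1 ->
  derivable_pt_lim g (f x) l2 -> L = l2 * l1 -> derivable_pt_lim (fun t => g (f t)) x L.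
Proof. intros H1 H2 ->. exact (derivable_pt_lim_comp f g x l1 l2 H1 H2). Qed.

Definition x_dot_grad n f (x : nat -> R) := sumn n (fun i => x i * partial i f x).

(* The i-th component of the vector field [x |x|^m |f|^p] and its i-th partial derivative. *)
Definition flux n p f m i (x : nat -> R) := x i * rpow (normn n x) m * rpow (Rabs (f x)) p.
Definition flux_deriv n p f m i (x : nat -> R) :=
  (rpow (normn n x) m + x i * (m * x i * rpow (normn n x) (m - 2))) * rpow (Rabs (f x)) p
  + x i * rpow (normn n x) m * (p * spow p (f x) * partial i f x).

Definition div_flux n p f m (x : nat -> R) :=
  (INR n + m) * rpow (normn n x) m * rpow (Rabs (f x)) p
  + p * rpow (normn n x) m * spow p (f x) * x_dot_grad n f x.

Lemma sumn_flux_deriv n p f m x : sumn n (fun i => flux_deriv n p f m i x) = div_flux n p f m x.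
Proof.
  set (R := normn n x). set (a := rpow R m * rpow (Rabs (f x)) p).
  set (b := m * rpow R (m - 2) * rpow (Rabs (f x)) p). set (c := p * rpow R m * spow p (f x)).
  rewrite (sumn_ext n _ (fun i => (a + b * x i ^ 2) + c * (x i * partial i f x)))
    by (intros i _; unfold flux_deriv, a, b, c, R; ring).
  rewrite !sumn_plus, sumn_const, !sumn_scal, <- normn_sq.
  assert (E : R * R * rpow R (m - 2) = rpow R m).
  { unfold R. rewrite <- rpow_2, <- rpow_plus by apply normn_ge0. f_equal; ring. }
  unfold div_flux, x_dot_grad. fold R. unfold a, b, c.
  rewrite <- E. ring.
Qed.

Definition grad_weight n p a f (x : nat -> R) := rpow (gradnorm n f x) p / rpow (normn n x) (a * p).
Definition hardy_weight n p a (f : (nat -> R) -> R) x :=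
  rpow (Rabs (f x)) p / rpow (normn n x) ((a + 1) * p).
Definition pow_weight n p (f : (nat -> R) -> R) d x := rpow (Rabs (f x)) p * rpow (normn n x) d.
(* Writing [f = |x|^(-g) v], one has [x . grad f + g f = |x|^(-g) x . grad v]. *)
Definition radial_remainder n f g x := (x_dot_grad n f x + g * f x) / normn n x.
Definition remainder_weight n p a f g x :=
  rpow (Rabs (radial_remainder n f g x)) p * rpow (normn n x) (- (a * p)).
Definition cross_weight n p f g d x :=
  spow p (f x) * (x_dot_grad n f x + g * f x) * rpow (normn n x) d.

Lemma abs_x_dot_grad_le n f x : Rabs (x_dot_grad n f x) <= normn n x * gradnorm n f x.
Proof.
  unfold x_dot_grad, normn, gradnorm. rewrite <- sqrt_mult by apply sumn_sq_ge0.
  rewrite <- sqrt_Rsqr_abs. apply sqrt_le_1_alt. rewrite Rsqr_pow2.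
  apply (cauchy_schwarz_sumn n (fun i => x i) (fun i => partial i f x)).
Qed.

Lemma abs_x_dot_grad_div_le n f x : 0 < normn n x ->
  Rabs (x_dot_grad n f x / normn n x) <= gradnorm n f x.
Proof.
  intros Hx. unfold Rdiv. rewrite Rabs_mult, Rabs_inv, (Rabs_pos_eq (normn n x)) by lra.
  apply Rmult_le_reg_r with (normn n x); auto. rewrite Rmult_assoc, Rinv_l by lra.
  pose proof (abs_x_dot_grad_le n f x). lra.
Qed.

Lemma spow_scale p k u : 0 <= k -> spow p (k * u) = rpow k (p - 1) * spow p u.
Proof.
  intros Hk. unfold spow. rewrite Rabs_mult, (Rabs_pos_eq k), rpow_mult by (auto; apply Rabs_pos).
  replace (p - 1) with (1 + (p - 2)) by ring. rewrite rpow_1_plus by auto. ring.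
Qed.

Lemma spow_opp p u : spow p (- u) = - spow p u.
Proof. unfold spow. rewrite Rabs_Ropp. ring. Qed.

(* The elementary inequality with [a = - g f / |x|] and [b] the radial remainder:
   then [a + b = x . grad f / |x|], whose [p]-th power is at most [|grad f|^p]. *)
Lemma hardy_gap_pointwise n p a c f g x : 2 <= p -> is_cp p c -> 0 < g ->
  g = (INR n - p - a * p) / p ->
  Rpower g p * hardy_weight n p a f x - Rpower g (p - 1) * div_flux n p f (- (a * p) - p) x
  + c * remainder_weight n p a f g x <= grad_weight n p a f x.
Proof.
  intros Hp Hc Hg Hgd. unfold hardy_weight, div_flux, remainder_weight, grad_weight.
  destruct (normn_ge0 n x) as [HR|HR].
  2:{ rewrite <- HR, !(rpow_nonpos 0) by lra. unfold Rdiv. rewrite !Rinv_0. lra. }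
  set (R := normn n x) in *. set (Q := rpow R (a * p)). set (P := rpow R p).
  set (F := f x). set (S := x_dot_grad n f x). set (B := radial_remainder n f g x).
  assert (HQ : 0 < Q) by (apply rpow_gt0; auto). assert (HP : 0 < P) by (apply rpow_gt0; auto).
  assert (E1 : rpow R ((a + 1) * p) = Q * P)
    by (unfold Q, P; rewrite <- rpow_plus by lra; f_equal; ring).
  assert (E2 : rpow R (- (a * p) - p) = / (Q * P))
    by (rewrite <- E1, <- rpow_opp by lra; f_equal; ring).
  assert (E3 : rpow R (- (a * p)) = / Q) by (apply rpow_opp; lra).
  assert (Hn : INR n + (- (a * p) - p) = p * g) by (rewrite Hgd; field; lra).
  assert (Hscale : forall q, rpow (g / R) q = Rpower g q / rpow R q).
  { intros q. unfold Rdiv. rewrite rpow_mult, rpow_inv, rpow_pos_eq by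
      (auto; try apply Rlt_le, Rinv_0_lt_compat; lra). reflexivity. }
  pose proof (rpow_abs_add_ge p c (g / R * - F) B Hp Hc) as Hsc.
  replace (g / R * - F + B) with (S / R) in Hsc by (unfold B, radial_remainder; fold S R F; field; lra).
  rewrite Rabs_mult, rpow_mult, Rabs_Ropp, spow_scale, spow_opp, Rabs_pos_eq, !Hscale in Hsc
    by (try apply Rabs_pos; apply Rlt_le, Rdiv_lt_0_compat; auto).
  assert (HP' : P = R * rpow R (p - 1)) by (unfold P; rewrite <- rpow_1_plus by lra; f_equal; ring).
  pose proof (rpow_gt0 R (p - 1) HR).
  rewrite E1, E2, E3, Hn, (Rpower_split g p), <- (spow_mul_self p F), HP' by auto.
  fold P in Hsc. rewrite HP', <- (spow_mul_self p F), (Rpower_split g p) in Hsc by auto.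
  set (Bp := rpow (Rabs B) p) in *. unfold B, radial_remainder in Hsc. fold S F R in Hsc.
  apply Rmult_le_compat_r with (r := / Q) in Hsc; [|apply Rlt_le, Rinv_0_lt_compat; auto].
  eapply Rle_trans; [|eapply Rle_trans; [exact Hsc|]].
  - right. field. repeat split; lra.
  - unfold Rdiv. apply Rmult_le_compat_r; [apply Rlt_le, Rinv_0_lt_compat; auto|].
    apply rpow_le_base; [lra|split; [apply Rabs_pos|now apply abs_x_dot_grad_div_le]].
Qed.

Lemma pow_weight_split n p f g d x :
  (INR n + d - p * g) * pow_weight n p f d x = div_flux n p f d x - p * cross_weight n p f g d x.
Proof. unfold pow_weight, div_flux, cross_weight. rewrite <- (spow_mul_self p (f x)). ring. Qed.

Lemma young_eps p u v eps : 1 < p -> 0 <= u -> 0 <= v -> 0 < eps ->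
  p * (u * v) <= rpow eps p * rpow u p + (p - 1) * rpow (/ eps) (p / (p - 1)) * rpow v (p / (p - 1)).
Proof.
  intros Hp Hu Hv He. pose proof (Rinv_0_lt_compat eps He).
  pose proof (young p (eps * u) (/ eps * v) Hp ltac:(nra) ltac:(nra)) as Y.
  replace (eps * u * (/ eps * v)) with (u * v) in Y by (field; lra).
  rewrite !rpow_mult in Y by lra.
  apply Rle_trans with (p * (rpow eps p * rpow u p / p
    + rpow (/ eps) (p / (p - 1)) * rpow v (p / (p - 1)) / (p / (p - 1)))).
  - apply Rmult_le_compat_l; lra.
  - right. field. lra.
Qed.

(* The weight [|x|^d] of the cross term is split as [|x|^(-a) |x|^(d+1+a)] between the two
   Young factors; [d'] is the weight of the second one raised to the power [p/(p-1)]. *)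
Lemma cross_weight_young n p a f g d d' eps x : 2 <= p -> 0 < eps ->
  d' = (d + 1 + a) * (p / (p - 1)) ->
  Rabs (p * cross_weight n p f g d x) <=
  rpow eps p * remainder_weight n p a f g x
  + (p - 1) * rpow (/ eps) (p / (p - 1)) * pow_weight n p f d' x.
Proof.
  intros Hp He Hd'. unfold cross_weight, remainder_weight, pow_weight.
  set (R := normn n x). set (B := radial_remainder n f g x). set (F := f x).
  destruct (normn_ge0 n x) as [HR|HR]; fold R in HR.
  2:{ rewrite (rpow_nonpos R d), Rmult_0_r, Rmult_0_r, Rabs_R0 by lra.
      apply Rplus_le_le_0_compat; repeat apply Rmult_le_pos; try apply rpow_ge0; lra. }
  set (u := Rabs B * rpow R (- a)). set (v := rpow (Rabs F) (p - 1) * rpow R (d + 1 + a)).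
  assert (Huv : Rabs (p * (spow p F * (x_dot_grad n f x + g * F) * rpow R d)) = p * (u * v)).
  { assert (HB : Rabs (x_dot_grad n f x + g * F) = Rabs B * R).
    { unfold B, radial_remainder. fold R F. unfold Rdiv.
      rewrite Rabs_mult, Rabs_inv, (Rabs_pos_eq R) by lra. field. lra. }
    assert (HR' : rpow R (- a) * rpow R (d + 1 + a) = R * rpow R d).
    { rewrite <- rpow_plus, <- rpow_1_plus by lra. f_equal; ring. }
    rewrite !Rabs_mult, (Rabs_pos_eq p), abs_spow, HB, (Rabs_pos_eq (rpow R d))
      by (try apply rpow_ge0; lra).
    unfold u, v. transitivity (p * (Rabs B * rpow (Rabs F) (p - 1) * (R * rpow R d))); [ring|].
    rewrite <- HR'. ring. }
  assert (Hu : rpow u p = rpow (Rabs B) p * rpow R (- (a * p))).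
  { unfold u. rewrite rpow_mult, rpow_rpow by (try apply Rabs_pos; try apply rpow_ge0; lra).
    do 2 f_equal. ring. }
  assert (Hv : rpow v (p / (p - 1)) = rpow (Rabs F) p * rpow R d').
  { unfold v. rewrite rpow_mult, !rpow_rpow by (try apply Rabs_pos; try apply rpow_ge0; lra).
    rewrite Hd'. do 2 f_equal; field; lra. }
  rewrite Huv, <- Hu, <- Hv. apply young_eps; auto; [lra|apply Rmult_le_pos..]; try apply rpow_ge0.
  apply Rabs_pos.
Qed.

Lemma le_of_young_family p k N D M : 2 <= p -> 0 <= k -> 0 <= N -> 0 <= D -> 0 <= M ->
  (forall eps, 0 < eps -> p * k * N <= rpow eps p * D + (p - 1) * rpow (/ eps) (p / (p - 1)) * M) ->
  rpow k p * rpow N p / rpow M (p - 1) <= D.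
Proof.
  intros Hp [Hk|<-] [HN|<-] HD [HM|<-] Hyp;
    rewrite ?(rpow_nonpos 0), ?Rmult_0_l, ?Rmult_0_r, ?Rdiv_0_l, ?Rdiv_0_r by lra; auto.
  set (w := k * N / M). assert (Hw : 0 < w) by (unfold w; apply Rdiv_lt_0_compat; nra).
  (* the minimizing choice [eps = w^(-(p-1)/p)] *)
  set (eps := rpow w (- ((p - 1) / p))). assert (He : 0 < eps) by (apply rpow_gt0; auto).
  specialize (Hyp eps He).
  assert (E1 : rpow eps p = / rpow w (p - 1)).
  { unfold eps. rewrite rpow_rpow, <- rpow_opp by lra. f_equal. field. lra. }
  assert (E2 : rpow (/ eps) (p / (p - 1)) = w).
  { rewrite rpow_inv by lra. unfold eps. rewrite rpow_rpow by lra.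
    replace (- ((p - 1) / p) * (p / (p - 1))) with (- (1)) by (field; lra).
    rewrite rpow_opp, rpow_1 by lra. field. lra. }
  rewrite E1, E2 in Hyp.
  set (W := rpow w (p - 1)) in *. assert (HW : 0 < W) by (apply rpow_gt0; auto).
  assert (HkNW : k * N * W <= D).
  { replace ((p - 1) * w * M) with ((p - 1) * (k * N)) in Hyp by (unfold w; field; lra).
    apply Rmult_le_reg_r with (/ W); [apply Rinv_0_lt_compat; auto|].
    replace (k * N * W * / W) with (k * N) by (field; lra). lra. }
  replace (rpow k p * rpow N p / rpow M (p - 1)) with (k * N * W); auto.
  unfold W, w, Rdiv. rewrite !rpow_mult, rpow_inv
    by (try apply Rmult_le_pos; try apply Rlt_le, Rinv_0_lt_compat; lra).
  replace (rpow k p) with (k * rpow k (p - 1)) by (rewrite <- rpow_1_plus by lra; f_equal; ring).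
  replace (rpow N p) with (N * rpow N (p - 1)) by (rewrite <- rpow_1_plus by lra; f_equal; ring).
  ring.
Qed.

Lemma Rmax_1_gt0 a : 0 < Rmax a 1.
Proof. pose proof (Rmax_r a 1). lra. Qed.

Section SupportedInAnnulus.

Variables (n : nat) (p : R) (f : (nat -> R) -> R) (r R0 : R).
Hypothesis p_ge2 : 2 <= p.
Hypothesis f_smooth : smoothn n f.
Hypothesis r_pos : 0 < r.
Hypothesis f_off_annulus : forall x, (normn n x < r \/ R0 < normn n x) -> f x = 0.

Lemma cont_at_f x : cont_at n f x.
Proof. exact (proj1 (f_smooth nil (Forall_nil _)) x). Qed.

Lemma cont_at_partial i x : (i < n)%nat -> cont_at n (partial i f) x.
Proof. intros Hi. exact (proj1 (f_smooth (i :: nil) (Forall_cons i Hi (Forall_nil _))) x). Qed.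

Lemma derivable_pt_lim_partial i x : (i < n)%nat ->
  derivable_pt_lim (fun t => f (upd x i t)) (x i) (partial i f x).
Proof.
  intros Hi. apply (epsilon_spec (inhabits 0) (fun L => derivable_pt_lim _ _ L)).
  exact (proj2 (f_smooth nil (Forall_nil _)) i Hi x).
Qed.

(* The complement of the annulus is open, and f vanishes on it, hence so do its partials. *)
Lemma f_loc0_off_annulus x i : (normn n x < r \/ R0 < normn n x) ->
  exists d, 0 < d /\ forall t, Rabs (t - x i) < d -> f (upd x i t) = 0.
Proof.
  intros [Hx|Hx].
  - destruct (normn_upd_near n x i (r - normn n x) ltac:(lra)) as [d [Hd H]].
    exists d; split; auto. intros t Ht. specialize (H t Ht). apply Rabs_def2 in H.
    apply f_off_annulus. lra.
  - destruct (normn_upd_near n x i (normn n x - R0) ltac:(lra)) as [d [Hd H]].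
    exists d; split; auto. intros t Ht. specialize (H t Ht). apply Rabs_def2 in H.
    apply f_off_annulus. lra.
Qed.

Lemma partial_off_annulus i x : (i < n)%nat -> (normn n x < r \/ R0 < normn n x) ->
  partial i f x = 0.
Proof.
  intros Hi Hx. apply (uniqueness_limite (fun t => f (upd x i t)) (x i)).
  - now apply derivable_pt_lim_partial.
  - now apply derivable_pt_lim_loc0, f_loc0_off_annulus.
Qed.

Lemma Cc_cube_of_annulus F : (forall x, (normn n x < r \/ R0 < normn n x) -> F x = 0) ->
  (forall x, 0 < normn n x -> cont_at n F x) -> Cc_cube n (Rmax R0 1) F.
Proof.
  intros Hoff Hc. split.
  - intros x. destruct (Rlt_dec (normn n x) r) as [Hx|Hx]; [|apply Hc; lra].
    intros eps He. destruct (cont_at_normn n x (r - normn n x) ltac:(lra)) as [d [Hd H]].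
    exists d; split; auto. intros y Hy. specialize (H y Hy). apply Rabs_def2 in H.
    rewrite (Hoff x), (Hoff y) by lra. rewrite Rminus_diag, Rabs_R0; auto.
  - intros x j _ Hj Hx. apply Hoff. right.
    pose proof (abs_coord_le_normn n x j Hj). pose proof (Rmax_l R0 1). lra.
Qed.

Lemma cont_at_normn_rpow m x : 0 < normn n x -> cont_at n (fun y => rpow (normn n y) m) x.
Proof.
  intros Hx. apply (cont_at_comp n (fun a => rpow a m)); [apply cont_at_normn|].
  apply derivable_continuous_pt. eexists. now apply derivable_pt_lim_rpow.
Qed.

Lemma cont_at_rpow_abs_f q x : 0 < q -> cont_at n (fun y => rpow (Rabs (f y)) q) x.
Proof.
  intros Hq. apply (cont_at_comp n (fun a => rpow (Rabs a) q)); [apply cont_at_f|].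
  now apply continuity_pt_rpow_abs.
Qed.

Lemma cont_at_spow_f x : cont_at n (fun y => spow p (f y)) x.
Proof. apply (cont_at_comp n (spow p)); [apply cont_at_f|apply continuity_pt_spow; lra]. Qed.

Lemma cont_at_x_dot_grad x : cont_at n (x_dot_grad n f) x.
Proof.
  apply cont_at_sumn. intros i Hi.
  apply cont_at_mult; [apply cont_at_coord|apply cont_at_partial]; auto.
Qed.

Lemma derivable_pt_lim_flux m i x : (i < n)%nat ->
  derivable_pt_lim (fun t => flux n p f m i (upd x i t)) (x i) (flux_deriv n p f m i x).
Proof.
  intros Hi. destruct (Rlt_dec (normn n x) r) as [Hx|Hx].
  - replace (flux_deriv n p f m i x) with 0
      by (unfold flux_deriv; rewrite (f_off_annulus x), spow0, rpow_abs0 by auto; ring).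
    destruct (f_loc0_off_annulus x i (or_introl Hx)) as [d [Hd H]].
    apply derivable_pt_lim_loc0. exists d; split; auto.
    intros t Ht. unfold flux. rewrite H, rpow_abs0 by auto. ring.
  - apply (derivable_pt_lim_mult_eq (fun t => upd x i t i * rpow (normn n (upd x i t)) m)
      (fun t => rpow (Rabs (f (upd x i t))) p) _
      (rpow (normn n x) m + x i * (m * x i * rpow (normn n x) (m - 2)))
      (p * spow p (f x) * partial i f x)).
    + apply derivable_pt_lim_mult_eq with 1 (m * x i * rpow (normn n x) (m - 2)).
      * apply derivable_pt_lim_ext with (fun t => t); [intros; now rewrite upd_eq|].
        apply derivable_pt_lim_id.
      * apply derivable_pt_lim_normn_rpow; auto. lra.
      * rewrite upd_eq, upd_id. ring.
    + apply (derivable_pt_lim_comp_eq (fun t => f (upd x i t)) (fun a => rpow (Rabs a) p) _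
        (partial i f x) (p * spow p (f x))).
      * now apply derivable_pt_lim_partial.
      * rewrite upd_id. apply derivable_pt_lim_rpow_abs. lra.
      * ring.
    + unfold flux_deriv. rewrite upd_eq, upd_id. ring.
Qed.

Lemma Cc_cube_flux m i : (i < n)%nat -> Cc_cube n (Rmax R0 1) (flux n p f m i).
Proof.
  intros Hi. apply Cc_cube_of_annulus.
  - intros x Hx. unfold flux. rewrite f_off_annulus, rpow_abs0 by auto. ring.
  - intros x Hx. unfold flux.
    repeat first [apply cont_at_rpow_abs_f | apply cont_at_normn_rpow | apply cont_at_coord
                 | apply cont_at_mult]; auto; lra.
Qed.

Lemma Cc_cube_flux_deriv m i : (i < n)%nat -> Cc_cube n (Rmax R0 1) (flux_deriv n p f m i).
Proof.
  intros Hi. apply Cc_cube_of_annulus.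
  - intros x Hx. unfold flux_deriv. rewrite f_off_annulus, rpow_abs0, spow0 by auto. ring.
  - intros x Hx. unfold flux_deriv.
    repeat first [apply cont_at_spow_f | apply cont_at_rpow_abs_f | apply cont_at_normn_rpow
                 | apply cont_at_partial | apply cont_at_coord | apply cont_at_const
                 | apply cont_at_plus | apply cont_at_mult]; auto; lra.
Qed.

Lemma integRn_div_flux m : integRn n (div_flux n p f m) = 0.
Proof.
  set (M := Rmax R0 1). assert (HM : 0 < M) by apply Rmax_1_gt0.
  replace (div_flux n p f m) with (fun x => sumn n (fun i => flux_deriv n p f m i x))
    by (apply functional_extensionality; intros; apply sumn_flux_deriv).
  unfold integRn. rewrite (integ_sumn n M HM) by (auto using Cc_cube_flux_deriv).
  rewrite (sumn_ext n _ (fun _ => 0)), sumn_const by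
    (intros i Hi; apply (integRn_derivative_eq0 n M HM (flux n p f m i) _ i);
     auto using Cc_cube_flux, Cc_cube_flux_deriv, derivable_pt_lim_flux).
  ring.
Qed.

Lemma off_annulus_eq0 x : (normn n x < r \/ R0 < normn n x) ->
  f x = 0 /\ gradnorm n f x = 0 /\ x_dot_grad n f x = 0.
Proof.
  intros Hx.
  assert (Hpartial : forall i, (i < n)%nat -> partial i f x ^ 2 = 0 /\ x i * partial i f x = 0)
    by (intros i Hi; rewrite partial_off_annulus by auto; split; ring).
  unfold gradnorm, x_dot_grad.
  rewrite (sumn_ext n (fun i => partial i f x ^ 2) (fun _ => 0)),
    (sumn_ext n (fun i => x i * partial i f x) (fun _ => 0)), sumn_const, Rmult_0_r, sqrt_0
    by (intros; apply Hpartial; auto).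
  auto.
Qed.

Ltac off_annulus := intros x Hx; destruct (off_annulus_eq0 x Hx) as [Hf0 [Hg0 Hs0]];
  rewrite ?Hf0, ?Hg0, ?Hs0, ?Rmult_0_r, ?Rplus_0_r, ?Rdiv_0_l, ?rpow_abs0, ?spow0,
    ?(rpow_nonpos 0) by lra;
  unfold Rdiv; ring.

Ltac cont_at_auto :=
  repeat first [apply cont_at_div | apply cont_at_spow_f | apply cont_at_rpow_abs_f
               | apply cont_at_normn_rpow | apply cont_at_x_dot_grad | apply cont_at_f
               | apply cont_at_normn | apply cont_at_const | apply cont_at_plus | apply cont_at_mult];
  auto; try lra; try (apply Rgt_not_eq, rpow_gt0; auto).

Ltac cont_on_punctured := intros ? ?; cont_at_auto.

Lemma cont_at_gradnorm x : cont_at n (gradnorm n f) x.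
Proof.
  apply (cont_at_comp n sqrt); [|apply continuity_pt_sqrt, sumn_sq_ge0].
  apply cont_at_sumn. intros i Hi. simpl.
  repeat apply cont_at_mult; auto using cont_at_partial, cont_at_const.
Qed.

Lemma Cc_cube_grad_weight a : Cc_cube n (Rmax R0 1) (grad_weight n p a f).
Proof.
  apply Cc_cube_of_annulus; unfold grad_weight; [off_annulus|]. intros x Hx.
  apply cont_at_div; [|apply cont_at_normn_rpow; auto|apply Rgt_not_eq, rpow_gt0; auto].
  apply (cont_at_comp n (fun a => rpow a p)); [apply cont_at_gradnorm|].
  apply continuity_pt_rpow; [lra|apply sqrt_pos].
Qed.

Lemma Cc_cube_hardy_weight a : Cc_cube n (Rmax R0 1) (hardy_weight n p a f).
Proof. apply Cc_cube_of_annulus; unfold hardy_weight; [off_annulus|cont_on_punctured]. Qed.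

Lemma Cc_cube_pow_weight d : Cc_cube n (Rmax R0 1) (pow_weight n p f d).
Proof. apply Cc_cube_of_annulus; unfold pow_weight; [off_annulus|cont_on_punctured]. Qed.

Lemma Cc_cube_div_flux m : Cc_cube n (Rmax R0 1) (div_flux n p f m).
Proof. apply Cc_cube_of_annulus; unfold div_flux; [off_annulus|cont_on_punctured]. Qed.

Lemma Cc_cube_cross_weight g d : Cc_cube n (Rmax R0 1) (cross_weight n p f g d).
Proof. apply Cc_cube_of_annulus; unfold cross_weight; [off_annulus|cont_on_punctured]. Qed.

Lemma Cc_cube_remainder_weight a g : Cc_cube n (Rmax R0 1) (remainder_weight n p a f g).
Proof.
  apply Cc_cube_of_annulus; unfold remainder_weight, radial_remainder; [off_annulus|].
  intros x Hx.
  apply cont_at_mult; [|apply cont_at_normn_rpow; auto].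
  apply (cont_at_comp n (fun a => rpow (Rabs a) p)); [cont_at_auto|apply continuity_pt_rpow_abs; lra].
Qed.

Lemma integRn_hardy_gap_ge a c g : is_cp p c -> 0 < g -> g = (INR n - p - a * p) / p ->
  c * integRn n (remainder_weight n p a f g) <=
  integRn n (grad_weight n p a f) - Rpower g p * integRn n (hardy_weight n p a f).
Proof.
  intros Hc Hg Hgd. set (M := Rmax R0 1). assert (HM : 0 < M) by apply Rmax_1_gt0.
  set (H := fun x => Rpower g p * hardy_weight n p a f x
                     + - Rpower g (p - 1) * div_flux n p f (- (a * p) - p) x).
  assert (HH : Cc_cube n M H) by (apply Cc_cube_lin; auto using Cc_cube_hardy_weight, Cc_cube_div_flux).
  assert (Hle : integRn n (fun x => 1 * H x + c * remainder_weight n p a f g x)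
                <= integRn n (grad_weight n p a f)).
  { apply (integRn_le n M HM); auto using Cc_cube_lin, Cc_cube_remainder_weight, Cc_cube_grad_weight.
    intros x. unfold H. pose proof (hardy_gap_pointwise n p a c f g x p_ge2 Hc Hg Hgd). lra. }
  rewrite (integRn_lin n M HM) in Hle by auto using Cc_cube_remainder_weight. unfold H in Hle.
  rewrite (integRn_lin n M HM), integRn_div_flux in Hle
    by auto using Cc_cube_hardy_weight, Cc_cube_div_flux.
  lra.
Qed.

Lemma integRn_pow_weight_ge0 d : 0 <= integRn n (pow_weight n p f d).
Proof.
  apply (integRn_ge0 n (Rmax R0 1)); [apply Rmax_1_gt0|apply Cc_cube_pow_weight|].
  intros x. apply Rmult_le_pos; apply rpow_ge0.
Qed.

Lemma integRn_remainder_weight_ge0 a g : 0 <= integRn n (remainder_weight n p a f g).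
Proof.
  apply (integRn_ge0 n (Rmax R0 1)); [apply Rmax_1_gt0|apply Cc_cube_remainder_weight|].
  intros x. apply Rmult_le_pos; apply rpow_ge0.
Qed.

Lemma integRn_pow_weight_young a g d d' eps : 0 < eps -> d' = (d + 1 + a) * (p / (p - 1)) ->
  Rabs (INR n + d - p * g) * integRn n (pow_weight n p f d) <=
  rpow eps p * integRn n (remainder_weight n p a f g)
  + (p - 1) * rpow (/ eps) (p / (p - 1)) * integRn n (pow_weight n p f d').
Proof.
  intros He Hd'. set (M := Rmax R0 1). assert (HM : 0 < M) by apply Rmax_1_gt0.
  assert (HKN : (INR n + d - p * g) * integRn n (pow_weight n p f d)
                = integRn n (fun x => - p * cross_weight n p f g d x)).
  { rewrite <- (integRn_scal n M HM) by apply Cc_cube_pow_weight.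
    replace (fun x => (INR n + d - p * g) * pow_weight n p f d x)
      with (fun x => 1 * div_flux n p f d x + - p * cross_weight n p f g d x)
      by (apply functional_extensionality; intros; rewrite pow_weight_split; ring).
    rewrite (integRn_lin n M HM), integRn_div_flux, (integRn_scal n M HM)
      by auto using Cc_cube_div_flux, Cc_cube_cross_weight.
    ring. }
  rewrite <- (Rabs_pos_eq (integRn n (pow_weight n p f d))), <- Rabs_mult, HKN
    by apply integRn_pow_weight_ge0.
  rewrite <- (integRn_lin n M HM) by auto using Cc_cube_remainder_weight, Cc_cube_pow_weight.
  apply (abs_integRn_le n M HM);
    auto using Cc_cube_lin, Cc_cube_scal, Cc_cube_cross_weight, Cc_cube_remainder_weight,
      Cc_cube_pow_weight.
  intros x. replace (- p * cross_weight n p f g d x) with (- (p * cross_weight n p f g d x)) by ring.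
  rewrite Rabs_Ropp. now apply cross_weight_young.
Qed.

Lemma hardy_gap_ge_interpolation a c g d d' : is_cp p c -> 0 < g -> g = (INR n - p - a * p) / p ->
  d' = (d + 1 + a) * (p / (p - 1)) ->
  c * rpow (Rabs (INR n + d - p * g) / p) p * rpow (integRn n (pow_weight n p f d)) p
    / rpow (integRn n (pow_weight n p f d')) (p - 1)
  <= integRn n (grad_weight n p a f) - Rpower g p * integRn n (hardy_weight n p a f).
Proof.
  intros Hc Hg Hgd Hd'.
  apply Rle_trans with (c * integRn n (remainder_weight n p a f g));
    [|apply integRn_hardy_gap_ge; auto].
  unfold Rdiv. rewrite !Rmult_assoc. apply Rmult_le_compat_l; [now apply (cp_ge0 p)|].
  rewrite <- Rmult_assoc.
  apply le_of_young_family; auto using integRn_pow_weight_ge0, integRn_remainder_weight_ge0.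
  - apply Rdiv_le_0_compat; [apply Rabs_pos|lra].
  - intros eps He. replace (p * (Rabs (INR n + d - p * g) * / p)) with (Rabs (INR n + d - p * g))
      by (field; lra).
    now apply integRn_pow_weight_young.
Qed.

End SupportedInAnnulus.

Theorem mainTheorem4 (n : nat) (p alpha b cp : R)
  (hn : (3 <= n)%nat) (hp2 : 2 <= p) (hpn : p < INR n)
  (halpha : alpha < (INR n - p) / p)
  (hcp : is_cp p cp)
  (f : (nat -> R) -> R) (hf : C0inf_punct n f) :
  let delta1 := INR n - p - alpha * p - (INR n + p * b) / p in
  let delta2 := INR n - p - alpha * p - b * p / (p - 1) in
  let Cp := cp * rpow (Rabs ((INR n * (p - 1) - p * b) / p ^ 2)) p in
  integRn n (fun x => rpow (gradnorm n f x) p / rpow (normn n x) (alpha * p))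
  - Rpower ((INR n - p - alpha * p) / p) p
    * integRn n (fun x => rpow (Rabs (f x)) p / rpow (normn n x) ((alpha + 1) * p))
  >= Cp * rpow (integRn n (fun x => rpow (Rabs (f x)) p * rpow (normn n x) delta1)) p
        / rpow (integRn n (fun x => rpow (Rabs (f x)) p * rpow (normn n x) delta2)) (p - 1).
Proof.
  intros delta1 delta2 Cp. destruct hf as [Hs [r [R0 [Hr Hz]]]].
  set (g := (INR n - p - alpha * p) / p).
  assert (Hg : 0 < g).
  { unfold g. apply Rdiv_lt_0_compat; [|lra].
    apply Rmult_lt_compat_r with (r := p) in halpha; [|lra].
    unfold Rdiv in halpha. rewrite Rmult_assoc, Rinv_l, Rmult_1_r in halpha by lra. lra. }
  assert (HCp : Cp = cp * rpow (Rabs (INR n + delta1 - p * g) / p) p).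
  { unfold Cp. replace ((INR n * (p - 1) - p * b) / p ^ 2) with ((INR n + delta1 - p * g) / p)
      by (unfold delta1, g; field; lra).
    unfold Rdiv. rewrite Rabs_mult, Rabs_inv, (Rabs_pos_eq p) by lra. reflexivity. }
  rewrite HCp. apply Rle_ge.
  apply (hardy_gap_ge_interpolation n p f r R0 hp2 Hs Hr Hz alpha cp g delta1 delta2 hcp Hg
    eq_refl).
  unfold delta1, delta2. field. lra.
Qed.
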